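(* In the setting below, for any parameters $\epsilon_1,\epsilon_2,\epsilon_3>0$, $0<\theta_l<\theta_u$, $\rho^0>0$, $\sigma>1$ and $y^0\in\Upsilon_\tau$, the termination condition in step (ii) of Algorithm PDC is satisfied after finitely many iterations.
   Context: Setting. $\mathcal A$ is a finite set of links; $\mathcal V=\{\Delta h: h\ge0,\ \Lambda h=d\}\subset\mathbb R^{|\mathcal A|}$, where $\Delta$ is a 0/1 link–route incidence matrix, $\Lambda$ a 0/1 OD–route incidence matrix in which every route belongs to exactly one OD pair and every OD pair has at least one route, and $d>0$ (so $\mathcal V$ is a nonempty compact convex polytope in $\mathbb R^{|\mathcal A|}_{\ge0}$). Let $u_a\ge0$, $\mathcal Y=\{y: 0\le y_a\le u_a\ \forall a\}$, $1\le\tau\le|\mathcal A|$, $\Upsilon_\tau=\{y\in\mathcal Y: |\{a: y_a>0\}|\le\tau\}$. Standing assumptions: each $t_a(y_a,v_a)$ is continuously differentiable and strictly increasing in $v_a$ for $y_a\ge0$; each $G_a$ is nonnegative, continuously differentiable, strictly increasing, convex; $\int_0^{v_a}t_a(y_a,w)dw$ and $t_a(y_a,v_a)v_a$ are convex in $(y_a,v_a)$. With $\eta>0$: $F(y,v)=\sum_a t_a(y_a,v_a)v_a+\eta\sum_aG_a(y_a)$, $f(y,v)=\sum_a\int_0^{v_a}t_a(y_a,w)dw$, $g(y)=\min_{v\in\mathcal V}f(y,v)$, $\varphi(y,v)=f(y,v)-g(y)$. $\mathcal V^*(y)$ is the set of $v\in\mathcal V$ with $\langle t(y,v),v'-v\rangle\ge0$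 for all $v'\in\mathcal V$; it is a singleton equal to $\arg\min_{v\in\mathcal V}f(y,v)$. Known fact: $g$ is convex and continuously differentiable on $\mathcal Y$. Define $\Phi(y,v;\bar y,\bar v)=f(y,v)-g(\bar y)-\nabla g(\bar y)^{\mathsf T}(y-\bar y)$ and, for given $\rho^k,\beta^k>0$ and $(y^k,v^k)$, $\Psi^k(y,v)=F(y,v)+\rho^k\Phi(y,v;y^k,v^k)+\rho^k\beta^k\|(y-y^k,v-v^k)\|_2^2$. Algorithm AMA with inputs $(\rho^k,\beta^k,y^k,v^k;y^{k,0})$: for $j=0,1,\dots$: $v^{k,j+1}$ = unique minimizer of $\Psi^k(y^{k,j},\cdot)$ over $\mathcal V$; $y^{k,j+1}$ = a minimizer of $\Psi^k(\cdot,v^{k,j+1})$ over $\Upsilon_\tau$; stop if $(y^{k,j+1},v^{k,j+1})$ is partially optimal (i.e. $\Psi^k(y^{k,j+1},v^{k,j+1})\le\Psi^k(y^{k,j+1},v)\ \forall v\in\mathcal V$ and $\le\Psi^k(y,v^{k,j+1})\ \forall y\in\Upsilon_\tau$). $\mathrm{AMA}(\cdot)$ denotes the returned point if it stops, otherwise any accumulation point of its iterates. Algorithm PDC with parameters $\epsilon_1,\epsilon_2,\epsilon_3>0$, $0<\theta_l<\theta_u$, $\rho^0>0$, $\sigma>1$, $y^0\in\Upsilon_\tau$: set $v^0\in\mathcal V^*(y^0)$ and choose $\beta^0\in[\theta_l/\rho^0,\theta_u/\rho^0]$; for $k=0,1,\dots$: (i) $(y^{k+1},v^{k+1})=\mathrm{AMA}(\rho^k,\beta^k,y^k,v^k;y^k)$;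 (ii) if $\|y^{k+1}-y^k\|_2\le\epsilon_1$, $\|v^{k+1}-v^k\|_2\le\epsilon_2$ and $\Phi(y^{k+1},v^{k+1};y^k,v^k)\le\epsilon_3$, stop and return $(y^{k+1},v^{k+1})$; (iii) set $\rho^{k+1}=\sigma\rho^k$ if $\Phi(y^{k+1},v^{k+1};y^k,v^k)>\epsilon_3$, else $\rho^{k+1}=\rho^k$; (iv) choose $\beta^{k+1}\in[\theta_l/\rho^{k+1},\theta_u/\rho^{k+1}]$. *)

From Stdlib Require Import Reals.
From Coquelicot Require Import Coquelicot.
Open Scope R_scope.

(** Vectors indexed by natural numbers; only indices below the relevant
    dimension are ever inspected. *)
Definition vec := nat -> R.

Fixpoint sumR (n : nat) (f : nat -> R) : R :=
  match n with O => 0 | S k => sumR k f + f k end.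

Fixpoint countpos (n : nat) (y : vec) : nat :=
  match n with
  | O => O
  | S k => (countpos k y + (if Rlt_dec 0 (y k) then 1 else 0))%nat
  end.

(** Links are 0..nL-1, routes 0..nR-1, OD pairs 0..nW-1.
    Delta a r = true iff link a lies on route r (0/1 link-route incidence);
    Lambda w r = true iff route r belongs to OD pair w (0/1 OD-route incidence). *)
Record instance := {
  nL : nat; nR : nat; nW : nat;
  Delta : nat -> nat -> bool;
  Lambda : nat -> nat -> bool;
  dem : vec;                 (* d, indexed by OD pairs *)
  cap : vec;                 (* u, indexed by links *)
  tau : nat;
  tt : nat -> R -> R -> R;   (* tt a y v = t_a(y_a, v_a) *)
  GG : nat -> R -> R;
  eta : R
}.

(** (M h)_i for a 0/1 matrix M with nR columns *)
Definition incid (n : nat) (M : nat -> nat -> bool) (h : vec) (i : nat) : R :=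
  sumR n (fun r => if M i r then h r else 0).

Definition Vset (P : instance) (v : vec) : Prop :=
  exists h : vec,
    (forall r, (r < nR P)%nat -> 0 <= h r) /\
    (forall w, (w < nW P)%nat -> incid (nR P) (Lambda P) h w = dem P w) /\
    (forall a, (a < nL P)%nat -> v a = incid (nR P) (Delta P) h a).

Definition Yset (P : instance) (y : vec) : Prop :=
  forall a, (a < nL P)%nat -> 0 <= y a <= cap P a.

Definition Ups (P : instance) (y : vec) : Prop :=
  Yset P y /\ (countpos (nL P) y <= tau P)%nat.

Definition C1_1d (h : R -> R) : Prop :=
  forall x, ex_derive h x /\ continuous (Derive h) x.

Definition C1_2d (h : R -> R -> R) : Prop :=
  forall y v,
    ex_derive (fun s => h s v) y /\ ex_derive (fun s => h y s) v /\
    continuity_2d_pt (fun y' v' => Derive (fun s => h s v') y') y v /\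
    continuity_2d_pt (fun y' v' => Derive (fun s => h y' s) v') y v.

Definition convex_on (D : R -> Prop) (h : R -> R) : Prop :=
  forall x1 x2 l, D x1 -> D x2 -> 0 <= l <= 1 ->
    h (l * x1 + (1 - l) * x2) <= l * h x1 + (1 - l) * h x2.

Definition convex_on2 (D : R -> R -> Prop) (h : R -> R -> R) : Prop :=
  forall y1 v1 y2 v2 l, D y1 v1 -> D y2 v2 -> 0 <= l <= 1 ->
    h (l * y1 + (1 - l) * y2) (l * v1 + (1 - l) * v2)
      <= l * h y1 v1 + (1 - l) * h y2 v2.

Definition quadrant (y v : R) : Prop := 0 <= y /\ 0 <= v.

Definition standing_assumptions (P : instance) : Prop :=
  (forall r, (r < nR P)%nat ->
     exists w, (w < nW P)%nat /\ Lambda P w r = true /\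
       (forall w', (w' < nW P)%nat -> Lambda P w' r = true -> w' = w)) /\
  (forall w, (w < nW P)%nat -> exists r, (r < nR P)%nat /\ Lambda P w r = true) /\
  (forall w, (w < nW P)%nat -> 0 < dem P w) /\
  (forall a, (a < nL P)%nat -> 0 <= cap P a) /\
  (1 <= tau P <= nL P)%nat /\
  0 < eta P /\
  (forall a, (a < nL P)%nat ->
     C1_2d (tt P a) /\
     (forall y v1 v2, 0 <= y -> 0 <= v1 -> v1 < v2 -> tt P a y v1 < tt P a y v2) /\
     convex_on2 quadrant (fun y v => RInt (fun w => tt P a y w) 0 v) /\
     convex_on2 quadrant (fun y v => tt P a y v * v) /\
     (forall y, 0 <= y -> 0 <= GG P a y) /\
     C1_1d (GG P a) /\
     (forall y1 y2, 0 <= y1 -> y1 < y2 -> GG P a y1 < GG P a y2) /\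
     convex_on (fun y => 0 <= y) (GG P a)).

Definition Fobj (P : instance) (y v : vec) : R :=
  sumR (nL P) (fun a => tt P a (y a) (v a) * v a)
  + eta P * sumR (nL P) (fun a => GG P a (y a)).

Definition fobj (P : instance) (y v : vec) : R :=
  sumR (nL P) (fun a => RInt (fun w => tt P a (y a) w) 0 (v a)).

(** g(y) = min_{v in V} f(y,v) (the infimum, which is attained) *)
Definition gval (P : instance) (y : vec) : R :=
  real (Glb_Rbar (fun r => exists v, Vset P v /\ r = fobj P y v)).

Definition gradg (P : instance) (ybar : vec) (a : nat) : R :=
  Derive (fun s => gval P (fun b => if Nat.eqb b a then ybar b + s else ybar b)) 0.

Definition Phi (P : instance) (y v ybar vbar : vec) : R :=
  fobj P y v - gval P ybar - sumR (nL P) (fun a => gradg P ybar a * (y a - ybar a)).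

Definition sqdist (n : nat) (x x' : vec) : R := sumR n (fun a => (x a - x' a) ^ 2).

Definition norm2 (n : nat) (x x' : vec) : R := sqrt (sqdist n x x').

(** Psi^k(y,v) with rho^k = rho, beta^k = beta, (y^k,v^k) = (yk,vk) *)
Definition Psi (P : instance) (rho beta : R) (yk vk : vec) (y v : vec) : R :=
  Fobj P y v + rho * Phi P y v yk vk
  + rho * beta * (sqdist (nL P) y yk + sqdist (nL P) v vk).

Definition Vstar (P : instance) (y v : vec) : Prop :=
  Vset P v /\
  forall v', Vset P v' -> 0 <= sumR (nL P) (fun a => tt P a (y a) (v a) * (v' a - v a)).

Definition partial_opt (P : instance) (rho beta : R) (yk vk : vec) (y v : vec) : Prop :=
  (forall v', Vset P v' -> Psi P rho beta yk vk y v <= Psi P rho beta yk vk y v') /\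
  (forall y', Ups P y' -> Psi P rho beta yk vk y v <= Psi P rho beta yk vk y' v).

(** (yo,vo) is a possible value of AMA(rho,beta,yk,vk; y0): there is a run of
    AMA (iterates Y j = y^{k,j}, Vs j = v^{k,j}, j >= 1 for Vs) such that either
    it stops at the first partially optimal iterate and returns it, or it never
    stops and (yo,vo) is an accumulation point of its iterates. *)
Definition AMA_out (P : instance) (rho beta : R) (yk vk y0 : vec) (yo vo : vec) : Prop :=
  exists (Y Vs : nat -> vec),
    Y O = y0 /\
    (forall j,
       (forall i, (i < j)%nat -> ~ partial_opt P rho beta yk vk (Y (S i)) (Vs (S i))) ->
       (Vset P (Vs (S j)) /\
        forall v', Vset P v' ->
          Psi P rho beta yk vk (Y j) (Vs (S j)) <= Psi P rho beta yk vk (Y j) v') /\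
       (Ups P (Y (S j)) /\
        forall y', Ups P y' ->
          Psi P rho beta yk vk (Y (S j)) (Vs (S j)) <= Psi P rho beta yk vk y' (Vs (S j)))) /\
    ((exists j,
        (forall i, (i < j)%nat -> ~ partial_opt P rho beta yk vk (Y (S i)) (Vs (S i))) /\
        partial_opt P rho beta yk vk (Y (S j)) (Vs (S j)) /\
        yo = Y (S j) /\ vo = Vs (S j)) \/
     ((forall j, ~ partial_opt P rho beta yk vk (Y (S j)) (Vs (S j))) /\
      (forall eps, 0 < eps -> forall N, exists j, (N <= j)%nat /\
         sqdist (nL P) (Y j) yo + sqdist (nL P) (Vs j) vo < eps))).

Definition PDC_stop (P : instance) (eps1 eps2 eps3 : R) (ys vs : nat -> vec) (k : nat) : Prop :=
  norm2 (nL P) (ys (S k)) (ys k) <= eps1 /\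
  norm2 (nL P) (vs (S k)) (vs k) <= eps2 /\
  Phi P (ys (S k)) (vs (S k)) (ys k) (vs k) <= eps3.

(** (ys, vs, rho, beta) is a run of PDC (up to its termination, if any). *)
Definition PDC_run (P : instance) (eps1 eps2 eps3 thl thu rho0 sigma : R) (y0 : vec)
    (ys vs : nat -> vec) (rho beta : nat -> R) : Prop :=
  ys O = y0 /\
  Vstar P y0 (vs O) /\
  rho O = rho0 /\
  thl / rho0 <= beta O <= thu / rho0 /\
  (forall k, (forall i, (i < k)%nat -> ~ PDC_stop P eps1 eps2 eps3 ys vs i) ->
     AMA_out P (rho k) (beta k) (ys k) (vs k) (ys k) (ys (S k)) (vs (S k))) /\
  (forall k, (forall i, (i <= k)%nat -> ~ PDC_stop P eps1 eps2 eps3 ys vs i) ->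
     rho (S k) = (if Rlt_dec eps3 (Phi P (ys (S k)) (vs (S k)) (ys k) (vs k))
                  then sigma * rho k else rho k) /\
     thl / rho (S k) <= beta (S k) <= thu / rho (S k)).

From Pilot Require Import Defs.
From Stdlib Require Import Reals.
From Coquelicot Require Import Coquelicot.
From Stdlib Require Import Lra Lia Psatz Classical ClassicalEpsilon.
Open Scope R_scope.

(* The partial linearization of g at y^k minorizes g: g is convex, and Danskin's formula
   shows that it is differentiable with gradient the integral of dt_a/dy_a up to the optimal
   flow.  Hence Phi(y, v; y^k, v^k) >= f(y, v) - g(y) >= 0, while the output of AMA never
   exceeds Psi^k(y^k, v) for any feasible v.  If PDC never stopped, either rho^k would be
   multiplied by sigma infinitely often, which is impossible because rho^k Phi^k is bounded
   whenever Phi^k > eps3, or rho^k would eventually be a constant r, and then F + r (f - g)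
   would decrease by at least theta_l min(eps1^2, eps2^2) at every step while staying
   bounded below. *)

Lemma sumR_ext n f g : (forall a, (a < n)%nat -> f a = g a) -> sumR n f = sumR n g.
Proof.
  induction n as [|n IH]; simpl; intros H; [reflexivity|].
  rewrite IH, H by (intros; try apply H; lia). reflexivity.
Qed.

Lemma sumR_add n f g : sumR n (fun a => f a + g a) = sumR n f + sumR n g.
Proof. induction n as [|n IH]; simpl; [lra|]. rewrite IH. lra. Qed.

Lemma sumR_sub n f g : sumR n (fun a => f a - g a) = sumR n f - sumR n g.
Proof. induction n as [|n IH]; simpl; [lra|]. rewrite IH. lra. Qed.

Lemma sumR_scal n c f : sumR n (fun a => c * f a) = c * sumR n f.
Proof. induction n as [|n IH]; simpl; [lra|]. rewrite IH. lra. Qed.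

Lemma sumR_const n c : sumR n (fun _ => c) = INR n * c.
Proof. induction n as [|n IH]; simpl sumR; [simpl; ring|]. rewrite IH, S_INR. ring. Qed.

Lemma sumR_le n f g : (forall a, (a < n)%nat -> f a <= g a) -> sumR n f <= sumR n g.
Proof.
  induction n as [|n IH]; simpl; intros H; [lra|].
  assert (sumR n f <= sumR n g) by (apply IH; intros; apply H; lia).
  assert (f n <= g n) by (apply H; lia). lra.
Qed.

Lemma sumR_le_sub n f g a k : (forall b, (b < n)%nat -> f b <= g b) -> (a < n)%nat ->
  f a <= g a - k -> sumR n f <= sumR n g - k.
Proof.
  induction n as [|n IH]; simpl; intros H Ha Hk; [lia|].
  destruct (Nat.eq_dec a n) as [->|Hne].
  - assert (sumR n f <= sumR n g) by (apply sumR_le; intros; apply H; lia). lra.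
  - assert (sumR n f <= sumR n g - k) by (apply IH; [intros; apply H; lia|lia|auto]).
    assert (f n <= g n) by (apply H; lia). lra.
Qed.

Lemma sumR_abs_le n f : Rabs (sumR n f) <= sumR n (fun a => Rabs (f a)).
Proof.
  induction n as [|n IH]; simpl; [rewrite Rabs_R0; lra|].
  eapply Rle_trans; [apply Rabs_triang|]. lra.
Qed.

Lemma sumR_eq0 n f : (forall a, (a < n)%nat -> f a = 0) -> sumR n f = 0.
Proof. intros H. rewrite (sumR_ext n f (fun _ => 0)), sumR_const by auto. ring. Qed.

Lemma sumR_ge0 n f : (forall a, (a < n)%nat -> 0 <= f a) -> 0 <= sumR n f.
Proof. intros H. rewrite <- (sumR_eq0 n (fun _ => 0)) by auto. apply sumR_le; auto. Qed.

Lemma sumR_term_le n f a : (forall b, (b < n)%nat -> 0 <= f b) -> (a < n)%nat ->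
  f a <= sumR n f.
Proof.
  induction n as [|n IH]; simpl; intros H Ha; [lia|].
  assert (0 <= sumR n f) by (apply sumR_ge0; intros; apply H; lia).
  assert (0 <= f n) by (apply H; lia).
  destruct (Nat.eq_dec a n) as [->|Hne]; [lra|].
  assert (f a <= sumR n f) by (apply IH; [intros; apply H; lia|lia]). lra.
Qed.

Lemma sumR_indicator n g a : (a < n)%nat ->
  sumR n (fun b => g b * (if Nat.eqb b a then 1 else 0)) = g a.
Proof.
  induction n as [|n IH]; simpl; intros Ha; [lia|].
  destruct (Nat.eq_dec a n) as [->|Hne].
  - rewrite Nat.eqb_refl, sumR_eq0; [ring|].
    intros b Hb. destruct (Nat.eqb_spec b n); [lia|ring].
  - rewrite IH by lia. destruct (Nat.eqb_spec n a); [lia|ring].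
Qed.

Lemma finite_min_pos n (Q : nat -> R -> Prop) :
  (forall a, (a < n)%nat -> exists e, 0 < e /\ Q a e) ->
  (forall a e e', 0 < e' <= e -> Q a e -> Q a e') ->
  exists e, 0 < e /\ forall a, (a < n)%nat -> Q a e.
Proof.
  intros H Hmono. induction n as [|n IH].
  - exists 1. split; [lra|intros; lia].
  - destruct IH as [e [He Hall]]; [intros; apply H; lia|].
    destruct (H n (Nat.lt_succ_diag_r n)) as [e1 [He1 H1]].
    assert (Hm : 0 < Rmin e e1) by (apply Rmin_pos; auto).
    exists (Rmin e e1). split; auto. intros a Ha. destruct (Nat.eq_dec a n) as [->|].
    + apply Hmono with e1; auto. split; [auto|apply Rmin_r].
    + apply Hmono with e; [split; [auto|apply Rmin_l]|apply Hall; lia].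
Qed.

Lemma finite_max_bound n (Q : nat -> R -> Prop) :
  (forall a, (a < n)%nat -> exists C, Q a C) ->
  (forall a C C', C <= C' -> Q a C -> Q a C') ->
  exists C, forall a, (a < n)%nat -> Q a C.
Proof.
  intros H Hmono. induction n as [|n IH].
  - exists 0. intros; lia.
  - destruct IH as [C Hall]; [intros; apply H; lia|].
    destruct (H n (Nat.lt_succ_diag_r n)) as [C1 H1].
    exists (Rmax C C1). intros a Ha. destruct (Nat.eq_dec a n) as [->|].
    + apply Hmono with C1; [apply Rmax_r|auto].
    + apply Hmono with C; [apply Rmax_l|apply Hall; lia].
Qed.

Lemma sqdist_ge0 n x x' : 0 <= sqdist n x x'.
Proof. apply sumR_ge0. intros; apply pow2_ge_0. Qed.

Lemma sqdist_diag n x : sqdist n x x = 0.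
Proof. apply sumR_eq0. intros; ring. Qed.

Definition closev (n : nat) (d : R) (x x' : vec) : Prop :=
  forall a, (a < n)%nat -> Rabs (x' a - x a) < d.

Lemma closev_refl n d x : 0 < d -> closev n d x x.
Proof. intros Hd a Ha. rewrite Rminus_diag_eq, Rabs_R0; auto. Qed.

Lemma closev_of_sqdist n x x' d : 0 < d -> sqdist n x x' < d * d -> closev n d x' x.
Proof.
  intros Hd H a Ha.
  assert (Hc : (x a - x' a) ^ 2 <= sqdist n x x')
    by (apply (sumR_term_le n (fun a => (x a - x' a) ^ 2)); auto; intros; apply pow2_ge_0).
  apply Rnot_le_lt. intros Hge.
  assert (d * d <= Rabs (x a - x' a) * Rabs (x a - x' a)) by (apply Rmult_le_compat; lra).
  rewrite <- Rabs_mult, Rabs_pos_eq in H0 by apply Rle_0_sqr. simpl in Hc. lra.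
Qed.

Lemma norm2_le n x x' e : 0 < e -> sqdist n x x' <= e * e -> norm2 n x x' <= e.
Proof. intros He H. unfold norm2. rewrite <- (sqrt_square e) by lra. apply sqrt_le_1_alt. auto. Qed.

Lemma continuity_pt_eps f x : continuity_pt f x <->
  forall e, 0 < e -> exists d, 0 < d /\ forall x', Rabs (x' - x) < d -> Rabs (f x' - f x) < e.
Proof.
  split; intros H e He; destruct (H e He) as [d [Hd Hf]]; exists d; split; auto.
  - intros x' Hx'. destruct (Req_dec x' x) as [->|Hne].
    + rewrite Rminus_diag_eq, Rabs_R0; auto.
    + apply Hf. split; [split; [exact I|auto]|exact Hx'].
  - intros x' [_ Hx']. apply Hf. exact Hx'.
Qed.

Lemma ex_derive_continuity_pt f x : ex_derive f x -> continuity_pt f x.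
Proof.
  intros H. apply continuity_pt_filterlim.
  exact (@ex_derive_continuous R_AbsRing R_NormedModule f x H).
Qed.

Lemma continuity_2d_pt_snd f x y : continuity_2d_pt f x y -> continuity_pt (f x) y.
Proof.
  intros H. apply continuity_pt_eps. intros e He.
  destruct (H (mkposreal e He)) as [d Hd]. exists d. split; [apply cond_pos|].
  intros y' Hy'. apply Hd; auto. rewrite Rminus_diag_eq, Rabs_R0 by auto. apply cond_pos.
Qed.

Lemma continuity_pt_bounded f a b : a <= b -> (forall u, a <= u <= b -> continuity_pt f u) ->
  exists B, forall u, a <= u <= b -> Rabs (f u) <= B.
Proof.
  intros Hab Hc. destruct (continuity_ab_maj (fun u => Rabs (f u)) a b Hab) as [m [Hm _]].
  - intros c Hc'. apply (continuity_pt_comp f Rabs); auto. apply Rcontinuity_abs.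
  - exists (Rabs (f m)). auto.
Qed.

Lemma abs_RInt_le_const_unordered (f : R -> R) a b B : ex_RInt f a b -> ex_RInt f b a ->
  (forall u, Rmin a b <= u <= Rmax a b -> Rabs (f u) <= B) ->
  Rabs (RInt f a b) <= Rabs (b - a) * B.
Proof.
  intros H1 H2 H. destruct (Rle_dec a b) as [Hab|Hab].
  - rewrite (Rabs_pos_eq (b - a)) by lra. apply abs_RInt_le_const; auto.
    intros u Hu. apply H. rewrite Rmin_left, Rmax_right; lra.
  - rewrite <- opp_RInt_swap by auto. change (Rabs (- RInt f b a) <= Rabs (b - a) * B).
    rewrite Rabs_Ropp, (Rabs_left (b - a)), Ropp_minus_distr by lra.
    apply abs_RInt_le_const; auto; [lra|].
    intros u Hu. apply H. rewrite Rmin_right, Rmax_left; lra.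
Qed.

Lemma RInt_ge_const (f : R -> R) a b c : a <= b -> ex_RInt f a b ->
  (forall w, a < w < b -> c <= f w) -> (b - a) * c <= RInt f a b.
Proof.
  intros. replace ((b - a) * c) with (RInt (fun _ => c) a b) by (rewrite RInt_const; reflexivity).
  apply RInt_le; auto. apply ex_RInt_const.
Qed.

Lemma RInt_le_const (f : R -> R) a b c : a <= b -> ex_RInt f a b ->
  (forall w, a < w < b -> f w <= c) -> RInt f a b <= (b - a) * c.
Proof.
  intros. replace ((b - a) * c) with (RInt (fun _ => c) a b) by (rewrite RInt_const; reflexivity).
  apply RInt_le; auto. apply ex_RInt_const.
Qed.

Definition jointly_continuous_at (h : R -> R -> R) (y v : R) : Prop :=
  forall e, 0 < e -> exists d, 0 < d /\
    forall y' v', Rabs (y' - y) < d -> Rabs (v' - v) < d -> Rabs (h y' v' - h y v) < e.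

Lemma jointly_continuous_const c y v : jointly_continuous_at (fun _ _ => c) y v.
Proof. intros e He. exists 1. split; [lra|]. intros. rewrite Rminus_diag_eq, Rabs_R0; auto. Qed.

Lemma jointly_continuous_fst f y v : continuity_pt f y -> jointly_continuous_at (fun y _ => f y) y v.
Proof.
  intros H e He. destruct (proj1 (continuity_pt_eps f y) H e He) as [d [Hd H']].
  exists d. split; auto.
Qed.

Lemma jointly_continuous_snd f y v : continuity_pt f v -> jointly_continuous_at (fun _ v => f v) y v.
Proof.
  intros H e He. destruct (proj1 (continuity_pt_eps f v) H e He) as [d [Hd H']].
  exists d. split; auto.
Qed.

Lemma jointly_continuous_plus h1 h2 y v :
  jointly_continuous_at h1 y v -> jointly_continuous_at h2 y v ->
  jointly_continuous_at (fun y v => h1 y v + h2 y v) y v.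
Proof.
  intros H1 H2 e He.
  destruct (H1 (e / 2)) as [d1 [Hd1 G1]]; [lra|]. destruct (H2 (e / 2)) as [d2 [Hd2 G2]]; [lra|].
  exists (Rmin d1 d2). split; [apply Rmin_pos; auto|]. intros y' v' Hy Hv.
  assert (A := G1 y' v' (Rlt_le_trans _ _ _ Hy (Rmin_l _ _)) (Rlt_le_trans _ _ _ Hv (Rmin_l _ _))).
  assert (B := G2 y' v' (Rlt_le_trans _ _ _ Hy (Rmin_r _ _)) (Rlt_le_trans _ _ _ Hv (Rmin_r _ _))).
  replace (h1 y' v' + h2 y' v' - (h1 y v + h2 y v))
    with ((h1 y' v' - h1 y v) + (h2 y' v' - h2 y v)) by ring.
  eapply Rle_lt_trans; [apply Rabs_triang|]. lra.
Qed.

Lemma jointly_continuous_opp h y v :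
  jointly_continuous_at h y v -> jointly_continuous_at (fun y v => - h y v) y v.
Proof.
  intros H e He. destruct (H e He) as [d [Hd G]]. exists d. split; auto. intros y' v' Hy Hv.
  replace (- h y' v' - - h y v) with (- (h y' v' - h y v)) by ring. rewrite Rabs_Ropp. auto.
Qed.

Lemma jointly_continuous_minus h1 h2 y v :
  jointly_continuous_at h1 y v -> jointly_continuous_at h2 y v ->
  jointly_continuous_at (fun y v => h1 y v - h2 y v) y v.
Proof.
  intros H1 H2. apply (jointly_continuous_plus h1 (fun y v => - h2 y v)); auto.
  apply jointly_continuous_opp; auto.
Qed.

Lemma jointly_continuous_mult h1 h2 y v :
  jointly_continuous_at h1 y v -> jointly_continuous_at h2 y v ->
  jointly_continuous_at (fun y v => h1 y v * h2 y v) y v.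
Proof.
  intros H1 H2 e He.
  set (A := Rabs (h1 y v)). set (B := Rabs (h2 y v)).
  assert (0 <= A) by apply Rabs_pos. assert (0 <= B) by apply Rabs_pos.
  set (r := Rmin 1 (e / (3 * (A + B + 1)))).
  assert (Hr : 0 < r) by (apply Rmin_pos; [lra|apply Rdiv_lt_0_compat; lra]).
  assert (Hr1 : r <= 1) by apply Rmin_l.
  assert (Hr2 : r * (A + B + 1) <= e / 3).
  { apply Rle_trans with (e / (3 * (A + B + 1)) * (A + B + 1)).
    - apply Rmult_le_compat_r; [lra|apply Rmin_r].
    - right. field. lra. }
  destruct (H1 r Hr) as [d1 [Hd1 G1]]. destruct (H2 r Hr) as [d2 [Hd2 G2]].
  exists (Rmin d1 d2). split; [apply Rmin_pos; auto|]. intros y' v' Hy Hv.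
  assert (X := G1 y' v' (Rlt_le_trans _ _ _ Hy (Rmin_l _ _)) (Rlt_le_trans _ _ _ Hv (Rmin_l _ _))).
  assert (Y := G2 y' v' (Rlt_le_trans _ _ _ Hy (Rmin_r _ _)) (Rlt_le_trans _ _ _ Hv (Rmin_r _ _))).
  replace (h1 y' v' * h2 y' v' - h1 y v * h2 y v) with
    ((h1 y' v' - h1 y v) * (h2 y' v' - h2 y v) + (h1 y' v' - h1 y v) * h2 y v
     + h1 y v * (h2 y' v' - h2 y v)) by ring.
  eapply Rle_lt_trans; [apply Rabs_triang|].
  eapply Rle_lt_trans; [apply Rplus_le_compat_r, Rabs_triang|].
  rewrite !Rabs_mult. fold A B.
  assert (0 <= Rabs (h1 y' v' - h1 y v)) by apply Rabs_pos.
  assert (0 <= Rabs (h2 y' v' - h2 y v)) by apply Rabs_pos.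
  assert (Rabs (h1 y' v' - h1 y v) * Rabs (h2 y' v' - h2 y v) <= r * r) by (apply Rmult_le_compat; lra).
  assert (Rabs (h1 y' v' - h1 y v) * B <= r * B) by (apply Rmult_le_compat_r; lra).
  assert (A * Rabs (h2 y' v' - h2 y v) <= A * r) by (apply Rmult_le_compat_l; lra).
  assert (r * r <= r * 1) by (apply Rmult_le_compat_l; lra).
  nra.
Qed.

Lemma sumR_jointly_continuous n (K : nat -> R -> R -> R) (y v : vec) :
  (forall a, (a < n)%nat -> jointly_continuous_at (K a) (y a) (v a)) ->
  forall e, 0 < e -> exists d, 0 < d /\ forall y' v', closev n d y y' -> closev n d v v' ->
  Rabs (sumR n (fun a => K a (y' a) (v' a)) - sumR n (fun a => K a (y a) (v a))) < e.
Proof.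
  intros H e He.
  set (e' := e / (INR n + 1)).
  assert (Hn : 0 <= INR n) by apply pos_INR.
  assert (He' : 0 < e') by (apply Rdiv_lt_0_compat; lra).
  destruct (finite_min_pos n (fun a d => forall y' v', Rabs (y' - y a) < d -> Rabs (v' - v a) < d ->
              Rabs (K a y' v' - K a (y a) (v a)) < e')) as [d [Hd Hall]].
  - intros a Ha. apply (H a Ha e' He').
  - intros a d d' Hdd G y' v' Hy Hv. apply G; lra.
  - exists d. split; auto. intros y' v' Hy Hv. rewrite <- sumR_sub.
    eapply Rle_lt_trans; [apply sumR_abs_le|]. eapply Rle_lt_trans.
    + apply (sumR_le n _ (fun _ => e')). intros a Ha. left. apply Hall; auto.
    + rewrite sumR_const. unfold e'. apply Rmult_lt_reg_r with (INR n + 1); [lra|].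
      field_simplify; lra.
Qed.

Lemma inv_INR_succ_eventually_lt d : 0 < d ->
  exists N, forall k, (N <= k)%nat -> / (INR k + 1) < d.
Proof.
  intros Hd. destruct (INR_unbounded (/ d)) as [N HN]. exists N. intros k Hk.
  apply le_INR in Hk. assert (0 < / d) by (apply Rinv_0_lt_compat; auto).
  rewrite <- (Rinv_inv d). apply Rinv_lt_contravar; [apply Rmult_lt_0_compat|]; lra.
Qed.

(* S d is the set of values taken at level d of a net indexed by d -> 0+. *)
Lemma cauchy_net_limit (S : R -> R -> Prop) :
  (forall d, 0 < d -> exists x, S d x) ->
  (forall d d' x, 0 < d <= d' -> S d x -> S d' x) ->
  (forall e, 0 < e -> exists d, 0 < d /\ forall x x', S d x -> S d x' -> Rabs (x - x') < e) ->
  exists L, forall e, 0 < e -> exists d, 0 < d /\ forall x, S d x -> Rabs (x - L) < e.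
Proof.
  intros Hex Hmon Hc.
  assert (Hpos : forall k, 0 < / (INR k + 1))
    by (intros; apply Rinv_0_lt_compat; assert (0 <= INR k) by apply pos_INR; lra).
  set (u := fun k => proj1_sig (constructive_indefinite_description _ (Hex _ (Hpos k)))).
  assert (Hu : forall k, S (/ (INR k + 1)) (u k)) by (intros; unfold u; apply proj2_sig).
  assert (Hfar : forall d, 0 < d -> exists N, forall k, (N <= k)%nat -> S d (u k)).
  { intros d Hd. destruct (inv_INR_succ_eventually_lt d Hd) as [N HN].
    exists N. intros k Hk. apply Hmon with (/ (INR k + 1)); auto. split; auto. left; auto. }
  assert (Hcau : Cauchy_crit u).
  { intros e He. destruct (Hc e He) as [d [Hd H]]. destruct (Hfar d Hd) as [N HN].
    exists N. intros p q Hp Hq. unfold Rdist. apply H; auto. }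
  destruct (Rcomplete.R_complete u Hcau) as [L HL]. exists L. intros e He.
  destruct (Hc (e / 2)) as [d [Hd H]]; [lra|]. exists d. split; auto. intros x Hx.
  destruct (Hfar d Hd) as [N1 HN1]. destruct (HL (e / 2)) as [N2 HN2]; [lra|].
  specialize (HN2 (max N1 N2) (Nat.le_max_r _ _)). unfold Rdist in HN2.
  specialize (H x (u (max N1 N2)) Hx (HN1 _ (Nat.le_max_l _ _))).
  replace (x - L) with ((x - u (max N1 N2)) + (u (max N1 N2) - L)) by ring.
  eapply Rle_lt_trans; [apply Rabs_triang|]. lra.
Qed.

Lemma Rmin_Rmax_between lo hi a b u : lo <= a <= hi -> lo <= b <= hi ->
  Rmin a b <= u <= Rmax a b -> lo <= u <= hi.
Proof.
  intros Ha Hb Hu. split.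
  - apply Rle_trans with (Rmin a b); [apply Rmin_glb|]; lra.
  - apply Rle_trans with (Rmax a b); [|apply Rmax_lub]; lra.
Qed.

Lemma Rlt_Rmin_inv x y z : z < Rmin x y -> z < x /\ z < y.
Proof. intros H. split; eapply Rlt_le_trans; eauto; [apply Rmin_l|apply Rmin_r]. Qed.

Lemma mult_lt_half_of_small C x e : 0 <= C -> 0 < e -> Rabs x < e / (2 * (C + 1)) ->
  C * Rabs x < e / 2.
Proof.
  intros HC He Hx. assert (0 <= Rabs x) by apply Rabs_pos.
  apply Rle_lt_trans with (C * (e / (2 * (C + 1)))); [apply Rmult_le_compat_l; lra|].
  apply Rmult_lt_reg_r with (2 * (C + 1)); [lra|]. field_simplify; nra.
Qed.

Section LinkCost.
Variable t : R -> R -> R.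
Hypothesis Ht : C1_2d t.

Definition dt_dy (y u : R) : R := Derive (fun s => t s u) y.
Definition potential (y x : R) : R := RInt (fun w => t y w) 0 x.

Lemma t_continuity_v y v : continuity_pt (t y) v.
Proof. apply ex_derive_continuity_pt. apply (Ht y v). Qed.

Lemma t_continuity_y y u : continuity_pt (fun s => t s u) y.
Proof. apply ex_derive_continuity_pt. apply (Ht y u). Qed.

Lemma dt_dy_continuity_v y u : continuity_pt (dt_dy y) u.
Proof. apply (continuity_2d_pt_snd (fun y' v' => Derive (fun s => t s v') y')). apply (Ht y u). Qed.

Lemma ex_RInt_t y a b : ex_RInt (t y) a b.
Proof.
  apply (@ex_RInt_continuous R_CompleteNormedModule). intros.
  apply continuity_pt_filterlim, t_continuity_v.
Qed.

Lemma ex_RInt_dt_dy y a b : ex_RInt (dt_dy y) a b.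
Proof.
  apply (@ex_RInt_continuous R_CompleteNormedModule). intros.
  apply continuity_pt_filterlim, dt_dy_continuity_v.
Qed.

Lemma dt_dy_bounded y a b : a <= b -> exists B, 0 <= B /\ forall u, a <= u <= b -> Rabs (dt_dy y u) <= B.
Proof.
  intros Hab. destruct (continuity_pt_bounded (dt_dy y) a b Hab) as [B HB].
  - intros; apply dt_dy_continuity_v.
  - exists B. split; auto. apply Rle_trans with (Rabs (dt_dy y a)); [apply Rabs_pos|apply HB; lra].
Qed.

Lemma t_bounded_v y a b : a <= b -> exists B, 0 <= B /\ forall u, a <= u <= b -> Rabs (t y u) <= B.
Proof.
  intros Hab. destruct (continuity_pt_bounded (t y) a b Hab) as [B HB].
  - intros; apply t_continuity_v.
  - exists B. split; auto. apply Rle_trans with (Rabs (t y a)); [apply Rabs_pos|apply HB; lra].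
Qed.

(* First-order expansion in y, uniform in u over a compact interval: mean value theorem
   plus uniform continuity of the partial derivative. *)
Lemma t_taylor_y y a b e : 0 < e -> exists d, 0 < d /\ forall s u, Rabs s < d -> a <= u <= b ->
  Rabs (t (y + s) u - t y u - s * dt_dy y u) <= e * Rabs s.
Proof.
  intros He.
  destruct (uniform_continuity_2d_1d' dt_dy a b y) with (eps := mkposreal e He) as [d Hd].
  { intros x Hx. apply (Ht y x). }
  exists d. split; [apply cond_pos|]. intros s u Hs Hu.
  destruct (MVT_gen (fun z => t z u) y (y + s) (fun z => dt_dy z u)) as [c [Hc Heq]].
  { intros x _. apply Derive_correct. apply (Ht x u). }
  { intros x _. apply t_continuity_y. }
  cbv beta in Heq. rewrite Heq.
  replace (dt_dy c u * (y + s - y) - s * dt_dy y u) with (s * (dt_dy c u - dt_dy y u)) by ring.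
  rewrite Rabs_mult, Rmult_comm. apply Rmult_le_compat_r; [apply Rabs_pos|].
  left. simpl in Hd.
  assert (Hcy : Rabs (c - y) <= Rabs s).
  { unfold Rmin, Rmax in Hc. destruct (Rle_dec y (y + s)); apply Rabs_le_between'; split;
    unfold Rabs; destruct (Rcase_abs s); lra. }
  assert (Hd0 := cond_pos d).
  apply (Hd u y u c); auto; try lra.
  - apply Rabs_le_between' in Hcy. lra.
  - rewrite Rminus_diag_eq, Rabs_R0 by auto. apply cond_pos.
Qed.

Lemma t_lipschitz_y y a b : a <= b -> exists C d, 0 <= C /\ 0 < d /\
  forall s u, Rabs s < d -> a <= u <= b -> Rabs (t (y + s) u - t y u) <= C * Rabs s.
Proof.
  intros Hab. destruct (dt_dy_bounded y a b Hab) as [B [HB0 HB]].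
  destruct (t_taylor_y y a b 1) as [d [Hd H]]; [lra|].
  exists (B + 1), d. split; [lra|split; auto]. intros s u Hs Hu.
  specialize (H s u Hs Hu). specialize (HB u Hu).
  replace (t (y + s) u - t y u) with ((t (y + s) u - t y u - s * dt_dy y u) + s * dt_dy y u) by ring.
  eapply Rle_trans; [apply Rabs_triang|]. rewrite Rabs_mult.
  assert (0 <= Rabs s) by apply Rabs_pos. nra.
Qed.

Lemma potential_sub y y' x : potential y' x - potential y x = RInt (fun w => t y' w - t y w) 0 x.
Proof. unfold potential. rewrite (RInt_minus (t y')); auto; apply ex_RInt_t. Qed.

Lemma potential_lipschitz_y y M : 0 <= M -> exists C d, 0 <= C /\ 0 < d /\
  forall s x, Rabs s < d -> Rabs x <= M -> Rabs (potential (y + s) x - potential y x) <= C * Rabs s.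
Proof.
  intros HM. destruct (t_lipschitz_y y (-M) M) as [C [d [HC [Hd H]]]]; [lra|].
  exists (M * C), d. split; [nra|split; auto]. intros s x Hs Hx.
  assert (Hx' := proj1 (Rabs_le_between x M) Hx).
  rewrite potential_sub. eapply Rle_trans.
  - apply abs_RInt_le_const_unordered with (B := C * Rabs s);
      try (apply (@ex_RInt_minus R_NormedModule); apply ex_RInt_t).
    intros u Hu. apply H; auto. apply (Rmin_Rmax_between _ _ 0 x); lra.
  - rewrite Rminus_0_r. rewrite Rmult_assoc. apply Rmult_le_compat_r; [|exact Hx]. assert (0 <= Rabs s) by apply Rabs_pos. nra.
Qed.

Lemma potential_taylor_y y M L e : 0 <= L <= M -> 0 < e -> exists d, 0 < d /\
  forall s x, Rabs s < d -> 0 <= x <= M -> Rabs (x - L) < d ->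
  Rabs (potential (y + s) x - potential y x - s * RInt (dt_dy y) 0 L) <= e * Rabs s.
Proof.
  intros HL He. destruct (dt_dy_bounded y 0 M) as [B [HB0 HB]]; [lra|].
  destruct (t_taylor_y y 0 M (e / (2 * (M + 1)))) as [d1 [Hd1 H1]]; [apply Rdiv_lt_0_compat; lra|].
  exists (Rmin d1 (e / (2 * (B + 1)))). split; [apply Rmin_pos; auto; apply Rdiv_lt_0_compat; lra|].
  intros s x Hs Hx HxL.
  assert (Hs1 : Rabs s < d1) by (eapply Rlt_le_trans; [apply Hs|apply Rmin_l]).
  assert (HxL2 : Rabs (x - L) < e / (2 * (B + 1))) by (eapply Rlt_le_trans; [apply HxL|apply Rmin_r]).
  assert (Hint : ex_RInt (fun w => t (y + s) w - t y w - s * dt_dy y w) 0 x).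
  { apply (@ex_RInt_minus R_NormedModule).
    - apply (@ex_RInt_minus R_NormedModule); apply ex_RInt_t.
    - apply (@ex_RInt_scal R_NormedModule). apply ex_RInt_dt_dy. }
  assert (E : potential (y + s) x - potential y x - s * RInt (dt_dy y) 0 L
            = RInt (fun w => t (y + s) w - t y w - s * dt_dy y w) 0 x - s * RInt (dt_dy y) x L).
  { assert (Hsc : RInt (fun w => s * dt_dy y w) 0 x = s * RInt (dt_dy y) 0 x)
      by exact (RInt_scal (dt_dy y) 0 x s (ex_RInt_dt_dy y 0 x)).
    assert (Hdiff : RInt (fun w => t (y + s) w - t y w - s * dt_dy y w) 0 x
                    = RInt (fun w => t (y + s) w - t y w) 0 x - RInt (fun w => s * dt_dy y w) 0 x).
    { apply (RInt_minus (fun w => t (y + s) w - t y w)).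
      - apply (@ex_RInt_minus R_NormedModule); apply ex_RInt_t.
      - apply (@ex_RInt_scal R_NormedModule). apply ex_RInt_dt_dy. }
    assert (Hch : RInt (dt_dy y) 0 x + RInt (dt_dy y) x L = RInt (dt_dy y) 0 L)
      by exact (RInt_Chasles (dt_dy y) 0 x L (ex_RInt_dt_dy y 0 x) (ex_RInt_dt_dy y x L)).
    rewrite potential_sub, Hdiff, Hsc, <- Hch. ring. }
  rewrite E. eapply Rle_trans; [apply Rabs_triang|]. rewrite Rabs_Ropp, Rabs_mult.
  assert (A1 : Rabs (RInt (fun w => t (y + s) w - t y w - s * dt_dy y w) 0 x)
               <= x * (e / (2 * (M + 1)) * Rabs s)).
  { rewrite <- (Rminus_0_r x) at 2. apply abs_RInt_le_const; [lra|auto|].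
    intros u Hu. apply H1; auto. lra. }
  assert (A2 : Rabs (RInt (dt_dy y) x L) <= Rabs (x - L) * B).
  { rewrite Rabs_minus_sym.
    apply abs_RInt_le_const_unordered; try apply ex_RInt_dt_dy.
    intros u Hu. apply HB. apply (Rmin_Rmax_between _ _ x L); lra. }
  assert (0 <= Rabs s) by apply Rabs_pos.
  assert (A3 : x * (e / (2 * (M + 1)) * Rabs s) <= e / 2 * Rabs s).
  { replace (x * (e / (2 * (M + 1)) * Rabs s)) with ((x / (M + 1)) * (e / 2 * Rabs s)) by (field; lra).
    assert (x / (M + 1) <= 1) by (apply Rmult_le_reg_r with (M + 1); [lra|]; field_simplify; lra).
    assert (0 <= e / 2 * Rabs s) by nra. nra. }
  assert (A4 : Rabs (x - L) * B <= e / 2) by (rewrite Rmult_comm; left; apply mult_lt_half_of_small; lra).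
  assert (Rabs s * (Rabs (x - L) * B) <= Rabs s * (e / 2)) by (apply Rmult_le_compat_l; auto).
  nra.
Qed.

Lemma potential_bounded y M : 0 <= M -> exists C, forall x, Rabs x <= M -> Rabs (potential y x) <= C.
Proof.
  intros HM. destruct (t_bounded_v y (-M) M) as [T [HT0 HT]]; [lra|].
  exists (M * T). intros x Hx. assert (Hx' := proj1 (Rabs_le_between x M) Hx).
  unfold potential. eapply Rle_trans.
  - apply abs_RInt_le_const_unordered with (B := T); try apply ex_RInt_t.
    intros u Hu. apply HT. apply (Rmin_Rmax_between _ _ 0 x); [lra|lra|exact Hu].
  - rewrite Rminus_0_r. apply Rmult_le_compat_r; auto.
Qed.

Lemma potential_diff_v_le y v v' T : (forall u, Rmin v v' <= u <= Rmax v v' -> Rabs (t y u) <= T) ->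
  Rabs (potential y v' - potential y v) <= Rabs (v' - v) * T.
Proof.
  intros HT. unfold potential. change (fun w => t y w) with (t y).
  rewrite <- (RInt_Chasles (t y) 0 v v') by apply ex_RInt_t.
  change (plus (RInt (t y) 0 v) (RInt (t y) v v')) with (RInt (t y) 0 v + RInt (t y) v v').
  unfold Rminus. rewrite Rplus_comm, <- Rplus_assoc, Rplus_opp_l, Rplus_0_l.
  apply abs_RInt_le_const_unordered; auto; apply ex_RInt_t.
Qed.

Lemma potential_jointly_continuous y v : jointly_continuous_at potential y v.
Proof.
  intros e He. assert (Hp := Rabs_pos v).
  destruct (potential_lipschitz_y y (Rabs v + 1)) as [C [d1 [HC [Hd1 H1]]]]; [lra|].
  destruct (t_bounded_v y (v - 1) (v + 1)) as [T [HT0 HT]]; [lra|].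
  assert (0 < e / (2 * (C + 1))) by (apply Rdiv_lt_0_compat; lra).
  assert (0 < e / (2 * (T + 1))) by (apply Rdiv_lt_0_compat; lra).
  exists (Rmin (Rmin d1 1) (Rmin (e / (2 * (C + 1))) (e / (2 * (T + 1))))).
  split; [repeat apply Rmin_pos; auto; lra|]. intros y' v' Hy Hv.
  destruct (Rlt_Rmin_inv _ _ _ Hy) as [[Hy1 _]%Rlt_Rmin_inv [Hy2 _]%Rlt_Rmin_inv].
  destruct (Rlt_Rmin_inv _ _ _ Hv) as [[_ Hv1]%Rlt_Rmin_inv [_ Hv2]%Rlt_Rmin_inv].
  replace (potential y' v' - potential y v) with
    ((potential (y + (y' - y)) v' - potential y v') + (potential y v' - potential y v))
    by (replace (y + (y' - y)) with y' by ring; ring).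
  eapply Rle_lt_trans; [apply Rabs_triang|].
  assert (Hv1' := proj1 (Rabs_lt_between' v' v 1) Hv1).
  assert (A1 : Rabs (potential (y + (y' - y)) v' - potential y v') <= C * Rabs (y' - y)).
  { apply H1; [exact Hy1|]. replace v' with ((v' - v) + v) by ring.
    eapply Rle_trans; [apply Rabs_triang|]. lra. }
  assert (A2 : Rabs (potential y v' - potential y v) <= Rabs (v' - v) * T).
  { apply potential_diff_v_le. intros u Hu. apply HT.
    apply (Rmin_Rmax_between _ _ v v'); [lra|lra|exact Hu]. }
  assert (A3 := mult_lt_half_of_small C (y' - y) e HC He Hy2).
  assert (A4 : Rabs (v' - v) * T < e / 2)
    by (rewrite Rmult_comm; apply mult_lt_half_of_small; auto).
  lra.
Qed.

Lemma t_jointly_continuous y v : jointly_continuous_at t y v.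
Proof.
  intros e He.
  destruct (t_lipschitz_y y (v - 1) (v + 1)) as [C [d1 [HC [Hd1 H1]]]]; [lra|].
  destruct (proj1 (continuity_pt_eps (t y) v) (t_continuity_v y v) (e / 2)) as [d2 [Hd2 H2]]; [lra|].
  assert (0 < e / (2 * (C + 1))) by (apply Rdiv_lt_0_compat; lra).
  exists (Rmin (Rmin d1 1) (Rmin d2 (e / (2 * (C + 1))))).
  split; [repeat apply Rmin_pos; auto; lra|]. intros y' v' Hy Hv.
  destruct (Rlt_Rmin_inv _ _ _ Hy) as [[Hy1 _]%Rlt_Rmin_inv [_ Hy2]%Rlt_Rmin_inv].
  destruct (Rlt_Rmin_inv _ _ _ Hv) as [[_ Hv1]%Rlt_Rmin_inv [Hv2 _]%Rlt_Rmin_inv].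
  replace (t y' v' - t y v) with ((t (y + (y' - y)) v' - t y v') + (t y v' - t y v))
    by (replace (y + (y' - y)) with y' by ring; ring).
  eapply Rle_lt_trans; [apply Rabs_triang|].
  assert (A1 : Rabs (t (y + (y' - y)) v' - t y v') <= C * Rabs (y' - y)).
  { apply H1; [exact Hy1|]. assert (Hv1' := proj1 (Rabs_lt_between' v' v 1) Hv1). lra. }
  assert (A2 := mult_lt_half_of_small C (y' - y) e HC He Hy2).
  specialize (H2 v' Hv2). lra.
Qed.

Hypothesis Hmono : forall y v1 v2, 0 <= y -> 0 <= v1 -> v1 < v2 -> t y v1 < t y v2.

Lemma t_le_mono y v1 v2 : 0 <= y -> 0 <= v1 -> v1 <= v2 -> t y v1 <= t y v2.
Proof. intros. destruct (Req_dec v1 v2) as [->|]; [lra|]. left; apply Hmono; lra. Qed.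

Lemma t_bounded_rect ymax M : exists T, forall y v, 0 <= y <= ymax -> 0 <= v <= M -> Rabs (t y v) <= T.
Proof.
  destruct (Rle_dec 0 ymax) as [Hc|Hc]; [|exists 0; intros; lra].
  destruct (continuity_pt_bounded (fun y => t y 0) 0 ymax Hc) as [B0 H0]; [intros; apply t_continuity_y|].
  destruct (continuity_pt_bounded (fun y => t y M) 0 ymax Hc) as [B1 H1]; [intros; apply t_continuity_y|].
  exists (Rmax B0 B1). intros y v Hy Hv.
  assert (t y 0 <= t y v) by (apply t_le_mono; lra).
  assert (t y v <= t y M) by (apply t_le_mono; lra).
  specialize (H0 y Hy). specialize (H1 y Hy).
  apply Rabs_le_between in H0. apply Rabs_le_between in H1.
  assert (B0 <= Rmax B0 B1) by apply Rmax_l. assert (B1 <= Rmax B0 B1) by apply Rmax_r.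
  apply Rabs_le_between. lra.
Qed.

(* Strict convexity of the potential in the flow, quantified: the midpoint gap is bounded
   below by e/8 times the least increase of t over steps of length e/4 on [0, M]. *)
Lemma potential_midpoint_gap_ordered y M e : 0 <= y -> 0 < e -> exists k, 0 < k /\
  forall x x', 0 <= x -> x' <= M -> x + e <= x' ->
  potential y ((x + x') / 2) <= (potential y x + potential y x') / 2 - k.
Proof.
  intros Hy He. destruct (Rle_dec 0 M) as [HM|HM]; [|exists 1; split; [lra|intros; lra]].
  destruct (continuity_ab_min (fun m => t y (m + e / 4) - t y m) 0 M HM) as [m0 [Hm0 Hm0r]].
  { intros c Hc. apply continuity_pt_minus; [|apply t_continuity_v].
    apply (continuity_pt_comp (fun m => m + e / 4) (t y)); [|apply t_continuity_v].
    apply continuity_pt_plus; [apply continuity_pt_id|apply continuity_pt_const; intros a b; auto]. }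
  set (mu := t y (m0 + e / 4) - t y m0).
  assert (Hmu : 0 < mu) by (unfold mu; assert (t y m0 < t y (m0 + e / 4)) by (apply Hmono; lra); lra).
  exists (e * mu / 8). split; [apply Rdiv_lt_0_compat; nra|].
  intros x x' Hx Hx' Hxx. set (m := (x + x') / 2).
  assert (Hmr : 0 <= m <= M) by (unfold m; lra).
  assert (Hmu2 : mu <= t y (m + e / 4) - t y m) by (apply Hm0; auto).
  unfold potential. change (fun w => t y w) with (t y).
  assert (E1 := RInt_Chasles (t y) 0 x m (ex_RInt_t y 0 x) (ex_RInt_t y x m)).
  assert (E2 := RInt_Chasles (t y) 0 m x' (ex_RInt_t y 0 m) (ex_RInt_t y m x')).
  assert (E3 := RInt_Chasles (t y) m (m + e / 4) x'
                  (ex_RInt_t y m (m + e / 4)) (ex_RInt_t y (m + e / 4) x')).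
  assert (I1 : RInt (t y) x m <= (m - x) * t y m).
  { apply RInt_le_const; [unfold m; lra|apply (ex_RInt_t)|].
    intros w Hw. apply t_le_mono; lra. }
  assert (I2 : (m + e / 4 - m) * t y m <= RInt (t y) m (m + e / 4)).
  { apply RInt_ge_const; [lra|apply (ex_RInt_t)|]. intros w Hw. apply t_le_mono; lra. }
  assert (I3 : (x' - (m + e / 4)) * t y (m + e / 4) <= RInt (t y) (m + e / 4) x').
  { apply RInt_ge_const; [unfold m; lra|apply (ex_RInt_t)|]. intros w Hw. apply t_le_mono; lra. }
  assert (Hh : m - x = x' - m) by (unfold m; field).
  assert (Hh2 : e / 4 <= x' - (m + e / 4)) by (unfold m; lra).
  assert (e / 4 * mu <= (x' - (m + e / 4)) * (t y (m + e / 4) - t y m)) by (apply Rmult_le_compat; lra).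
  change plus with Rplus in E1, E2, E3.
  clearbody m mu. revert E1 E2 E3 I1 I2 I3.
  generalize (RInt (t y) 0 x) (RInt (t y) x m) (RInt (t y) 0 m) (RInt (t y) m x') (RInt (t y) 0 x')
    (RInt (t y) m (m + e / 4)) (RInt (t y) (m + e / 4) x').
  intros. rewrite <- E2, <- E3, <- E1. nra.
Qed.

Lemma potential_midpoint_gap y M e : 0 <= y -> 0 < e -> exists k, 0 < k /\
  forall x x', 0 <= x <= M -> 0 <= x' <= M -> e <= Rabs (x - x') ->
  potential y ((x + x') / 2) <= (potential y x + potential y x') / 2 - k.
Proof.
  intros Hy He. destruct (potential_midpoint_gap_ordered y M e Hy He) as [k [Hk H]].
  exists k. split; auto. intros x x' Hx Hx' Hd. destruct (Rle_dec x x') as [Hle|Hle].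
  - rewrite Rabs_left1 in Hd by lra. apply H; lra.
  - rewrite Rabs_pos_eq in Hd by lra. replace ((x + x') / 2) with ((x' + x) / 2) by field.
    replace ((potential y x + potential y x') / 2) with ((potential y x' + potential y x) / 2) by field.
    apply H; lra.
Qed.
End LinkCost.

Lemma finite_bound_pos n (Q : nat -> R -> R -> Prop) :
  (forall a, (a < n)%nat -> exists C d, 0 < d /\ Q a C d) ->
  (forall a C C' d d', C <= C' -> 0 < d' <= d -> Q a C d -> Q a C' d') ->
  exists C d, 0 < d /\ forall a, (a < n)%nat -> Q a C d.
Proof.
  intros H Hmono.
  destruct (finite_max_bound n (fun a C => exists d, 0 < d /\ Q a C d)) as [C HC]; auto.
  { intros a C C' HCC [d [Hd Hq]]. exists d. split; auto. apply Hmono with C d; auto; lra. }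
  destruct (finite_min_pos n (fun a d => Q a C d)) as [d [Hd Hq]]; auto.
  { intros a d d' Hdd. apply Hmono; lra. }
  exists C, d. auto.
Qed.

Lemma incid_convex_comb n M h h' l i :
  incid n M (fun r => l * h r + (1 - l) * h' r) i = l * incid n M h i + (1 - l) * incid n M h' i.
Proof.
  unfold incid. rewrite <- !sumR_scal, <- sumR_add. apply sumR_ext. intros.
  destruct (M i a); ring.
Qed.

Lemma Vset_convex P v v' l : Vset P v -> Vset P v' -> 0 <= l <= 1 ->
  Vset P (fun a => l * v a + (1 - l) * v' a).
Proof.
  intros [h [H1 [H2 H3]]] [h' [H1' [H2' H3']]] Hl.
  exists (fun r => l * h r + (1 - l) * h' r). split; [|split].
  - intros r Hr. specialize (H1 r Hr). specialize (H1' r Hr). nra.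
  - intros w Hw. rewrite incid_convex_comb, H2, H2' by auto. ring.
  - intros a Ha. rewrite incid_convex_comb, H3, H3' by auto. ring.
Qed.

(* Each route carries at most the demand of its OD pair, so each link at most the sum
   over routes of the total demand. *)
Definition flow_bound (P : instance) : R :=
  sumR (nR P) (fun _ => sumR (nW P) (fun w => Rabs (dem P w))).

Lemma flow_bound_ge0 P : 0 <= flow_bound P.
Proof. apply sumR_ge0. intros. apply sumR_ge0. intros; apply Rabs_pos. Qed.

Lemma glb_inf_approx (E : R -> Prop) : (exists x, E x) -> (exists C, forall x, E x -> C <= x) ->
  (forall x, E x -> real (Glb_Rbar E) <= x) /\
  (forall d, 0 < d -> exists x, E x /\ x < real (Glb_Rbar E) + d).
Proof.
  intros [x0 Hx0] [C HC]. destruct (Glb_Rbar_correct E) as [Hlb Hgl].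
  assert (H1 : Rbar_le (Glb_Rbar E) x0) by (apply Hlb; auto).
  assert (H2 : Rbar_le C (Glb_Rbar E)) by (apply Hgl; intros x Hx; simpl; apply HC; auto).
  destruct (Glb_Rbar E) as [g| |]; simpl in H1, H2; try contradiction. simpl. split.
  - intros x Hx. assert (Rbar_le g x) by (apply Hlb; auto). auto.
  - intros d Hd. apply NNPP. intros Hn. assert (Hb : Rbar_le (g + d) g).
    { apply Hgl. intros x Hx. simpl. apply Rnot_lt_le. intros Hlt. apply Hn. exists x; split; auto. }
    simpl in Hb. lra.
Qed.

Section Network.
Variable P : instance.
Hypothesis HP : standing_assumptions P.
Notation n := (nL P).

Lemma standing_link a : (a < n)%nat ->
  C1_2d (tt P a) /\
  (forall y v1 v2, 0 <= y -> 0 <= v1 -> v1 < v2 -> tt P a y v1 < tt P a y v2) /\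
  convex_on2 quadrant (fun y v => RInt (fun w => tt P a y w) 0 v) /\
  (forall y, 0 <= y -> 0 <= GG P a y) /\
  C1_1d (GG P a) /\
  (forall y1 y2, 0 <= y1 -> y1 < y2 -> GG P a y1 < GG P a y2).
Proof.
  intros Ha. destruct HP as [_ [_ [_ [_ [_ [_ H]]]]]].
  destruct (H a Ha) as [H1 [H2 [H3 [_ [H5 [H6 [H7 _]]]]]]]. tauto.
Qed.

Lemma tt_C1 a : (a < n)%nat -> C1_2d (tt P a).
Proof. apply standing_link. Qed.

Lemma tt_mono a : (a < n)%nat ->
  forall y v1 v2, 0 <= y -> 0 <= v1 -> v1 < v2 -> tt P a y v1 < tt P a y v2.
Proof. apply standing_link. Qed.

Lemma Vset_bounded v : Vset P v -> forall a, (a < n)%nat -> 0 <= v a <= flow_bound P.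
Proof.
  destruct HP as [Hroute _]. intros [h [H1 [H2 H3]]] a Ha.
  rewrite H3 by auto. unfold incid. split.
  - apply sumR_ge0. intros r Hr. destruct (Defs.Delta P a r); [apply H1; auto|lra].
  - apply sumR_le. intros r Hr.
    destruct (Hroute r Hr) as [w [Hw [HL _]]].
    assert (h r <= dem P w).
    { rewrite <- (H2 w Hw). unfold incid.
      assert (Hr' := sumR_term_le (nR P) (fun r0 => if Lambda P w r0 then h r0 else 0) r).
      cbv beta in Hr'. rewrite HL in Hr'. apply Hr'; auto.
      intros b Hb. destruct (Lambda P w b); [apply H1; auto|lra]. }
    assert (dem P w <= sumR (nW P) (fun w => Rabs (dem P w))).
    { eapply Rle_trans; [apply Rle_abs|].
      apply (sumR_term_le (nW P) (fun w => Rabs (dem P w)) w); auto. intros; apply Rabs_pos. }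
    specialize (H1 r Hr). destruct (Defs.Delta P a r); lra.
Qed.

Lemma fobj_bounded y : exists C, forall v, Vset P v -> Rabs (fobj P y v) <= C.
Proof.
  destruct (finite_max_bound n (fun a C => forall x, Rabs x <= flow_bound P ->
              Rabs (potential (tt P a) (y a) x) <= C)) as [C HC].
  - intros a Ha. apply potential_bounded; [apply tt_C1; auto|apply flow_bound_ge0].
  - intros a C C' HCC H x Hx. specialize (H x Hx). lra.
  - exists (sumR n (fun _ => C)). intros v Hv. unfold fobj.
    eapply Rle_trans; [apply sumR_abs_le|]. apply sumR_le. intros a Ha. apply HC; auto.
    destruct (Vset_bounded v Hv a Ha). rewrite Rabs_pos_eq; lra.
Qed.

Lemma fobj_ext y y' v : (forall b, (b < n)%nat -> y b = y' b) -> fobj P y v = fobj P y' v.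
Proof. intros H. apply sumR_ext. intros a Ha. rewrite H; auto. Qed.

Lemma gval_ext y y' : (forall b, (b < n)%nat -> y b = y' b) -> gval P y = gval P y'.
Proof.
  intros H. unfold gval. f_equal. apply Glb_Rbar_eqset. intros x.
  split; intros [v [Hv ->]]; exists v; split; auto; [|symmetry]; apply fobj_ext; auto.
Qed.

Lemma potential_convex a y y' x x' l : (a < n)%nat -> 0 <= y -> 0 <= y' -> 0 <= x -> 0 <= x' ->
  0 <= l <= 1 ->
  potential (tt P a) (l * y + (1 - l) * y') (l * x + (1 - l) * x')
  <= l * potential (tt P a) y x + (1 - l) * potential (tt P a) y' x'.
Proof. intros Ha. intros. apply (standing_link a Ha); unfold quadrant; auto. Qed.

Variable v0 : vec.
Hypothesis Hv0 : Vset P v0.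

Lemma gval_inf y : (forall v, Vset P v -> gval P y <= fobj P y v) /\
  (forall d, 0 < d -> exists v, Vset P v /\ fobj P y v < gval P y + d).
Proof.
  destruct (fobj_bounded y) as [C HC].
  destruct (glb_inf_approx (fun r => exists v, Vset P v /\ r = fobj P y v)) as [H1 H2].
  - exists (fobj P y v0), v0. auto.
  - exists (- C). intros x [v [Hv ->]]. specialize (HC v Hv). apply Rabs_le_between in HC. lra.
  - split.
    + intros v Hv. apply H1. exists v; auto.
    + intros d Hd. destruct (H2 d Hd) as [x [[v [Hv ->]] Hlt]]. exists v; auto.
Qed.

Lemma gval_le_fobj y v : Vset P v -> gval P y <= fobj P y v.
Proof. apply gval_inf. Qed.

Lemma gval_approx y d : 0 < d -> exists v, Vset P v /\ fobj P y v < gval P y + d.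
Proof. apply gval_inf. Qed.

Lemma gval_convex y y' l : Yset P y -> Yset P y' -> 0 <= l <= 1 ->
  gval P (fun b => l * y b + (1 - l) * y' b) <= l * gval P y + (1 - l) * gval P y'.
Proof.
  intros Hy Hy' Hl. apply Rnot_lt_le. intros Hlt.
  set (d := gval P (fun b => l * y b + (1 - l) * y' b) - (l * gval P y + (1 - l) * gval P y')).
  assert (Hd : 0 < d) by (unfold d; lra).
  destruct (gval_approx y d Hd) as [v [Hv Hfv]]. destruct (gval_approx y' d Hd) as [v' [Hv' Hfv']].
  assert (H1 := gval_le_fobj (fun b => l * y b + (1 - l) * y' b) _ (Vset_convex P v v' l Hv Hv' Hl)).
  assert (H2 : fobj P (fun b => l * y b + (1 - l) * y' b) (fun a => l * v a + (1 - l) * v' a)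
               <= l * fobj P y v + (1 - l) * fobj P y' v').
  { unfold fobj. rewrite <- !sumR_scal, <- sumR_add. apply sumR_le. intros a Ha.
    apply (potential_convex a); auto;
      [apply Hy|apply Hy'|apply (Vset_bounded v)|apply (Vset_bounded v')]; auto. }
  assert (l * fobj P y v <= l * (gval P y + d)) by (apply Rmult_le_compat_l; lra).
  assert ((1 - l) * fobj P y' v' <= (1 - l) * (gval P y' + d)) by (apply Rmult_le_compat_l; lra).
  unfold d in *. nra.
Qed.

Section Danskin.
Variable ybar : vec.
Hypothesis Hyb : Yset P ybar.

Definition near_min (d : R) (v : vec) : Prop := Vset P v /\ fobj P ybar v < gval P ybar + d.

(* By strict convexity of each potential in the flow. *)
Lemma near_min_coord_close a e : (a < n)%nat -> 0 < e ->
  exists d, 0 < d /\ forall v v', near_min d v -> near_min d v' -> Rabs (v a - v' a) < e.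
Proof.
  intros Ha He.
  destruct (potential_midpoint_gap (tt P a) (tt_C1 a Ha) (tt_mono a Ha) (ybar a) (flow_bound P) e)
    as [k [Hk Hgap]]; [apply Hyb; auto|auto|].
  exists k. split; auto. intros v v' [Hv Hfv] [Hv' Hfv']. apply Rnot_le_lt. intros Hge.
  set (w := fun b => (1/2) * v b + (1 - 1/2) * v' b).
  assert (H1 := gval_le_fobj ybar w (Vset_convex P v v' (1/2) Hv Hv' ltac:(lra))).
  assert (H2 : fobj P ybar w <= sumR n (fun b => (1/2) * potential (tt P b) (ybar b) (v b)
                                    + (1 - 1/2) * potential (tt P b) (ybar b) (v' b)) - k).
  { apply sumR_le_sub with a; auto.
    - intros b Hb. cbv beta. unfold w.
      assert (Hc := potential_convex b (ybar b) (ybar b) (v b) (v' b) (1/2) Hb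
        (proj1 (Hyb b Hb)) (proj1 (Hyb b Hb)) (proj1 (Vset_bounded v Hv b Hb))
        (proj1 (Vset_bounded v' Hv' b Hb)) ltac:(lra)).
      replace ((1/2) * ybar b + (1 - 1/2) * ybar b) with (ybar b) in Hc by field. exact Hc.
    - unfold w. replace ((1/2) * v a + (1 - 1/2) * v' a) with ((v a + v' a) / 2) by field.
      replace ((1/2) * potential (tt P a) (ybar a) (v a) + (1 - 1/2) * potential (tt P a) (ybar a) (v' a))
        with ((potential (tt P a) (ybar a) (v a) + potential (tt P a) (ybar a) (v' a)) / 2) by field.
      apply Hgap; auto; [apply (Vset_bounded v)|apply (Vset_bounded v')]; auto. }
  rewrite sumR_add, !sumR_scal in H2. unfold fobj in Hfv, Hfv'. unfold potential in H2. lra.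
Qed.

Lemma near_min_coord_limit a : (a < n)%nat -> exists L, 0 <= L <= flow_bound P /\
  forall e, 0 < e -> exists d, 0 < d /\ forall v, near_min d v -> Rabs (v a - L) < e.
Proof.
  intros Ha.
  destruct (cauchy_net_limit (fun d x => exists v, near_min d v /\ x = v a)) as [L HL].
  - intros d Hd. destruct (gval_approx ybar d Hd) as [v Hv]. exists (v a), v. split; auto.
  - intros d d' x Hdd [v [[Hv Hf] ->]]. exists v. split; auto. split; auto. lra.
  - intros e He. destruct (near_min_coord_close a e Ha He) as [d [Hd H]]. exists d. split; auto.
    intros x x' [v [Hv ->]] [v' [Hv' ->]]. auto.
  - exists L.
    assert (Hcl : forall e, 0 < e -> exists v, Vset P v /\ Rabs (v a - L) < e).
    { intros e He. destruct (HL e He) as [d [Hd H]].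
      destruct (gval_approx ybar d Hd) as [v [Hv Hf]]. exists v. split; auto.
      apply H. exists v. split; auto. split; auto. }
    split; [split|].
    + apply Rnot_lt_le. intros Hlt. destruct (Hcl (- L)) as [v [Hv H]]; [lra|].
      destruct (Vset_bounded v Hv a Ha). apply Rabs_lt_between' in H. lra.
    + apply Rnot_lt_le. intros Hlt. destruct (Hcl (L - flow_bound P)) as [v [Hv H]]; [lra|].
      destruct (Vset_bounded v Hv a Ha). apply Rabs_lt_between' in H. lra.
    + intros e He. destruct (HL e He) as [d [Hd H]]. exists d. split; auto.
      intros v Hv. apply H. exists v; auto.
Qed.

(* The flow on link a at the (unique) minimizer of f(ybar, .), obtained as the limit of
   near-minimizers; the junk value 0 off the links is never used. *)
Definition limit_flow (a : nat) : R :=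
  epsilon (inhabits 0) (fun L => (a < n)%nat -> 0 <= L <= flow_bound P /\
    forall e, 0 < e -> exists d, 0 < d /\ forall v, near_min d v -> Rabs (v a - L) < e).

Lemma limit_flow_spec a : (a < n)%nat -> 0 <= limit_flow a <= flow_bound P /\
  forall e, 0 < e -> exists d, 0 < d /\ forall v, near_min d v -> Rabs (v a - limit_flow a) < e.
Proof.
  intros Ha. unfold limit_flow.
  match goal with |- context [epsilon ?i ?Q] => assert (HQ : Q (epsilon i Q)) end.
  { apply epsilon_spec. destruct (near_min_coord_limit a Ha) as [L HL]. exists L. auto. }
  apply HQ, Ha.
Qed.

(* Danskin's formula for the partial derivative of g. *)
Definition danskin_grad (a : nat) : R := RInt (dt_dy (tt P a) (ybar a)) 0 (limit_flow a).

Lemma near_min_uniformly_close e : 0 < e -> exists d, 0 < d /\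
  forall v, near_min d v -> forall a, (a < n)%nat -> Rabs (v a - limit_flow a) < e.
Proof.
  intros He.
  destruct (finite_min_pos n (fun a d => forall v, near_min d v -> Rabs (v a - limit_flow a) < e))
    as [d [Hd H]].
  - intros a Ha. apply limit_flow_spec; auto.
  - intros a d d' Hdd H v [Hv Hf]. apply H. split; [auto|lra].
  - exists d. split; auto.
Qed.

Lemma fobj_shift_lipschitz d : exists C eta, 0 <= C /\ 0 < eta /\ forall l v, Rabs l < eta ->
  Vset P v -> Rabs (fobj P (fun b => ybar b + l * d b) v - fobj P ybar v) <= C * Rabs l.
Proof.
  destruct (finite_bound_pos n (fun a C dd => forall s x, Rabs s < dd -> Rabs x <= flow_bound P ->
     Rabs (potential (tt P a) (ybar a + s) x - potential (tt P a) (ybar a) x) <= C * Rabs s))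
    as [C [dd [Hdd HC]]].
  - intros a Ha.
    destruct (potential_lipschitz_y (tt P a) (tt_C1 a Ha) (ybar a) (flow_bound P) (flow_bound_ge0 P))
      as [C [dd [_ [Hdd H]]]].
    exists C, dd. auto.
  - intros a C C' dd dd' HCC Hdd H s x Hs Hx.
    specialize (H s x ltac:(lra) Hx). assert (0 <= Rabs s) by apply Rabs_pos. nra.
  - set (Sd := sumR n (fun a => Rabs (d a))).
    assert (HSd : 0 <= Sd) by (apply sumR_ge0; intros; apply Rabs_pos).
    assert (HC0 : 0 <= Rmax C 0) by apply Rmax_r.
    assert (HCC : C <= Rmax C 0) by apply Rmax_l.
    exists (Rmax C 0 * Sd), (dd / (Sd + 1)). split; [nra|split; [apply Rdiv_lt_0_compat; lra|]].
    intros l v Hl Hv. unfold fobj. rewrite <- sumR_sub.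
    eapply Rle_trans; [apply sumR_abs_le|].
    replace (Rmax C 0 * Sd * Rabs l) with (Rmax C 0 * Rabs l * sumR n (fun a => Rabs (d a)))
      by (unfold Sd; ring).
    rewrite <- sumR_scal. apply sumR_le. intros a Ha.
    assert (Hda : Rabs (d a) <= Sd)
      by (apply (sumR_term_le n (fun a => Rabs (d a))); auto; intros; apply Rabs_pos).
    assert (0 <= Rabs l) by apply Rabs_pos.
    assert (Hl' : Rabs l * (Sd + 1) < dd) by (apply Rmult_lt_reg_r with (/ (Sd + 1));
      [apply Rinv_0_lt_compat; lra|]; rewrite Rmult_assoc, Rinv_r, Rmult_1_r; [exact Hl|lra]).
    eapply Rle_trans; [apply HC; auto|].
    + rewrite Rabs_mult. nra.
    + destruct (Vset_bounded v Hv a Ha). rewrite Rabs_pos_eq; lra.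
    + rewrite Rabs_mult. assert (0 <= Rabs (d a)) by apply Rabs_pos.
      assert (0 <= Rabs l * Rabs (d a)) by nra. nra.
Qed.

Lemma fobj_shift_linear d e : 0 < e -> exists eta delta, 0 < eta /\ 0 < delta /\
  forall l v, Rabs l < eta -> near_min delta v ->
  Rabs (fobj P (fun b => ybar b + l * d b) v - fobj P ybar v
        - l * sumR n (fun a => danskin_grad a * d a)) <= e * Rabs l.
Proof.
  intros He.
  set (Sd := sumR n (fun a => Rabs (d a))).
  assert (HSd : 0 <= Sd) by (apply sumR_ge0; intros; apply Rabs_pos).
  set (e' := e / (Sd + 1)).
  assert (He' : 0 < e') by (apply Rdiv_lt_0_compat; lra).
  destruct (finite_min_pos n (fun a dd => forall s x, Rabs s < dd -> 0 <= x <= flow_bound P ->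
     Rabs (x - limit_flow a) < dd -> Rabs (potential (tt P a) (ybar a + s) x
       - potential (tt P a) (ybar a) x - s * danskin_grad a) <= e' * Rabs s)) as [dd [Hdd HT]].
  - intros a Ha. apply (potential_taylor_y (tt P a) (tt_C1 a Ha)); auto. apply limit_flow_spec; auto.
  - intros a dd dd' Hdd H s x Hs Hx Hxl. apply H; auto; lra.
  - destruct (near_min_uniformly_close dd Hdd) as [delta [Hdelta Hclose]].
    exists (dd / (Sd + 1)), delta. split; [apply Rdiv_lt_0_compat; lra|split; auto].
    intros l v Hl Hv. unfold fobj. rewrite <- sumR_scal, <- !sumR_sub.
    eapply Rle_trans; [apply sumR_abs_le|].
    apply Rle_trans with (e' * Rabs l * Sd).
    + unfold Sd. rewrite <- sumR_scal. apply sumR_le. intros a Ha.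
      assert (Hda : Rabs (d a) <= Sd)
        by (apply (sumR_term_le n (fun a => Rabs (d a))); auto; intros; apply Rabs_pos).
      assert (0 <= Rabs l) by apply Rabs_pos.
      assert (Hl' : Rabs l * (Sd + 1) < dd) by (apply Rmult_lt_reg_r with (/ (Sd + 1));
        [apply Rinv_0_lt_compat; lra|]; rewrite Rmult_assoc, Rinv_r, Rmult_1_r; [exact Hl|lra]).
      replace (l * (danskin_grad a * d a)) with ((l * d a) * danskin_grad a) by ring.
      eapply Rle_trans; [apply HT; auto|].
      * rewrite Rabs_mult. nra.
      * apply Vset_bounded; auto. apply Hv.
      * rewrite Rabs_mult. apply Req_le. ring.
    + assert (0 <= Rabs l) by apply Rabs_pos.
      replace (e' * Rabs l * Sd) with ((e * Rabs l) * (Sd / (Sd + 1))) by (unfold e'; field; lra).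
      assert (Sd / (Sd + 1) <= 1) by (apply Rmult_le_reg_r with (Sd + 1); [lra|]; field_simplify; lra).
      assert (0 <= e * Rabs l) by nra. nra.
Qed.

(* Upper bound through a near-minimizer of f(ybar, .), lower bound through a near-minimizer
   of f(ybar + l d, .); both are near-minimizers of f(ybar, .), hence close to limit_flow. *)
Lemma gval_directional_derivative d e : 0 < e -> exists eta, 0 < eta /\ forall l, Rabs l < eta ->
  Rabs (gval P (fun b => ybar b + l * d b) - gval P ybar
        - l * sumR n (fun a => danskin_grad a * d a)) <= e * Rabs l.
Proof.
  intros He.
  destruct (fobj_shift_lipschitz d) as [C [eta1 [HC [Heta1 HL]]]].
  destruct (fobj_shift_linear d (e / 2)) as [eta2 [delta [Heta2 [Hdelta HT]]]]; [lra|].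
  set (eta := Rmin (Rmin eta1 eta2) (Rmin (Rmin (e / 2) 1) (delta / (2 * C + 2)))).
  assert (Heta : 0 < eta) by (repeat apply Rmin_pos; auto; try lra; apply Rdiv_lt_0_compat; lra).
  exists eta. split; auto. intros l Hl.
  destruct (Rlt_Rmin_inv _ _ _ Hl) as [[Hl1 Hl2]%Rlt_Rmin_inv [[Hle Hl1']%Rlt_Rmin_inv Hld]%Rlt_Rmin_inv].
  assert (Hal := Rabs_pos l).
  destruct (Req_dec l 0) as [->|Hl0].
  { rewrite (gval_ext (fun b => ybar b + 0 * d b) ybar) by (intros; ring).
    match goal with |- Rabs ?X <= _ => replace X with 0 by ring end. rewrite !Rabs_R0. lra. }
  assert (Hl2p : 0 < l * l) by (apply Rsqr_pos_lt; auto).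
  assert (Hsq : l * l = Rabs l * Rabs l)
    by (rewrite <- Rabs_mult; symmetry; apply Rabs_pos_eq; nra).
  assert (Hll : l * l <= e / 2 * Rabs l) by (rewrite Hsq; nra).
  assert (Hsmall : 2 * (l * l) + 2 * (C * Rabs l) < delta).
  { rewrite Hsq.
    apply Rmult_lt_compat_r with (r := 2 * C + 2) in Hld; [|lra].
    unfold Rdiv in Hld. rewrite Rmult_assoc, Rinv_l in Hld; nra. }
  assert (0 <= C * Rabs l) by nra.
  destruct (gval_approx ybar (l * l) Hl2p) as [u [Hu Hfu]].
  assert (Hun : near_min delta u) by (split; auto; lra).
  assert (Hu1 := HT l u Hl2 Hun). assert (Hu2 := HL l u Hl1 Hu).
  assert (Hgu := gval_le_fobj (fun b => ybar b + l * d b) u Hu).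
  destruct (gval_approx (fun b => ybar b + l * d b) (l * l) Hl2p) as [v [Hv Hfv]].
  assert (Hv2 := HL l v Hl1 Hv).
  apply Rabs_le_between in Hu2. apply Rabs_le_between in Hv2.
  assert (Hvn : near_min delta v) by (split; auto; lra).
  assert (Hv1 := HT l v Hl2 Hvn).
  assert (Hgv := gval_le_fobj ybar v Hv).
  apply Rabs_le_between in Hu1. apply Rabs_le_between in Hv1.
  apply Rabs_le_between. lra.
Qed.

Lemma gradg_eq_danskin_grad a : (a < n)%nat -> gradg P ybar a = danskin_grad a.
Proof.
  intros Ha. unfold gradg. apply is_derive_unique, is_derive_Reals.
  set (d := fun b => if Nat.eqb b a then 1 else 0).
  intros e He. destruct (gval_directional_derivative d (e / 2)) as [eta [Heta H]]; [lra|].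
  exists (mkposreal eta Heta). intros h Hh0 Hh. simpl in Hh. specialize (H h Hh).
  rewrite (gval_ext (fun b => if Nat.eqb b a then ybar b + (0 + h) else ybar b) (fun b => ybar b + h * d b)),
    (gval_ext (fun b => if Nat.eqb b a then ybar b + 0 else ybar b) ybar)
    by (intros b Hb; unfold d; destruct (Nat.eqb b a); ring).
  unfold d in H at 2. rewrite (sumR_indicator n danskin_grad a Ha) in H.
  assert (Hh' : 0 < Rabs h) by (apply Rabs_pos_lt; auto).
  replace ((gval P (fun b => ybar b + h * d b) - gval P ybar) / h - danskin_grad a)
    with ((gval P (fun b => ybar b + h * d b) - gval P ybar - h * danskin_grad a) / h) by (field; auto).
  unfold Rdiv. rewrite Rabs_mult, Rabs_inv.
  apply Rmult_lt_reg_r with (Rabs h); auto.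
  rewrite Rmult_assoc, Rinv_l by lra. nra.
Qed.

(* A convex function lies above its linearization at a point of differentiability. *)
Lemma gval_subgradient y : Yset P y ->
  gval P ybar + sumR n (fun a => gradg P ybar a * (y a - ybar a)) <= gval P y.
Proof.
  intros Hy.
  rewrite (sumR_ext n _ (fun a => danskin_grad a * (y a - ybar a)))
    by (intros a Ha; rewrite gradg_eq_danskin_grad; auto).
  set (d := fun b => y b - ybar b). set (S := sumR n (fun a => danskin_grad a * d a)).
  apply Rnot_lt_le. intros Hlt.
  change (sumR n (fun a => danskin_grad a * (y a - ybar a))) with S in Hlt.
  set (e := (gval P ybar + S - gval P y) / 2).
  assert (He : 0 < e) by (unfold e; lra).
  destruct (gval_directional_derivative d e He) as [eta [Heta H]].
  set (l := Rmin (eta / 2) 1).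
  assert (Hl : 0 < l) by (unfold l; apply Rmin_pos; lra).
  assert (Hl1 : l <= 1) by apply Rmin_r.
  assert (Hleta : l < eta) by (unfold l; eapply Rle_lt_trans; [apply Rmin_l|lra]).
  specialize (H l ltac:(rewrite Rabs_pos_eq; lra)).
  rewrite (Rabs_pos_eq l) in H by lra. apply Rabs_le_between in H.
  assert (Hc := gval_convex y ybar l Hy Hyb ltac:(lra)).
  rewrite (gval_ext (fun b => l * y b + (1 - l) * ybar b) (fun b => ybar b + l * d b)) in Hc
    by (intros b Hb; unfold d; ring).
  fold S in H. assert (l * (S - e - (gval P y - gval P ybar)) > 0) by (apply Rmult_lt_0_compat; unfold e; lra).
  lra.
Qed.
End Danskin.

Definition Psi_link (rho beta : R) (yk vk : vec) (a : nat) (y v : R) : R :=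
  (tt P a y v * v + eta P * GG P a y)
  + rho * (potential (tt P a) y v - gradg P yk a * (y - yk a))
  + rho * beta * ((y - yk a) * (y - yk a) + (v - vk a) * (v - vk a)).

Lemma Psi_sum_links rho beta yk vk y v : Psi P rho beta yk vk y v =
  sumR n (fun a => Psi_link rho beta yk vk a (y a) (v a)) - rho * gval P yk.
Proof.
  unfold Psi, Fobj, Phi, fobj, sqdist, Psi_link, potential.
  rewrite !sumR_add, !sumR_scal, sumR_sub, !sumR_add.
  rewrite (sumR_ext n (fun a => (y a - yk a) * (y a - yk a)) (fun a => (y a - yk a) ^ 2)),
    (sumR_ext n (fun a => (v a - vk a) * (v a - vk a)) (fun a => (v a - vk a) ^ 2))
    by (intros; ring).
  ring.
Qed.

Lemma Psi_link_jointly_continuous rho beta yk vk a y v : (a < n)%nat ->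
  jointly_continuous_at (Psi_link rho beta yk vk a) y v.
Proof.
  intros Ha. destruct (standing_link a Ha) as [Ht [_ [_ [_ [HG _]]]]].
  assert (HGc : forall y, continuity_pt (GG P a) y) by (intros; apply ex_derive_continuity_pt, HG).
  unfold Psi_link.
  repeat first
    [ apply jointly_continuous_plus | apply jointly_continuous_minus | apply jointly_continuous_opp
    | apply jointly_continuous_mult
    | apply jointly_continuous_const | apply (t_jointly_continuous _ Ht)
    | apply (potential_jointly_continuous _ Ht)
    | apply jointly_continuous_snd; apply continuity_pt_id
    | apply jointly_continuous_fst; apply continuity_pt_id
    | apply jointly_continuous_fst; apply HGc ].
Qed.

Lemma Psi_continuous rho beta yk vk y v e : 0 < e -> exists d, 0 < d /\ forall y' v',
  closev n d y y' -> closev n d v v' ->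
  Rabs (Psi P rho beta yk vk y' v' - Psi P rho beta yk vk y v) < e.
Proof.
  intros He.
  destruct (sumR_jointly_continuous n (Psi_link rho beta yk vk) y v) with (e := e) as [d [Hd H]]; auto.
  { intros a Ha. apply Psi_link_jointly_continuous; auto. }
  exists d. split; auto. intros y' v' Hy Hv. rewrite !Psi_sum_links.
  replace (sumR n (fun a => Psi_link rho beta yk vk a (y' a) (v' a)) - rho * gval P yk
           - (sumR n (fun a => Psi_link rho beta yk vk a (y a) (v a)) - rho * gval P yk))
    with (sumR n (fun a => Psi_link rho beta yk vk a (y' a) (v' a))
          - sumR n (fun a => Psi_link rho beta yk vk a (y a) (v a))) by ring.
  auto.
Qed.

Lemma Psi_le_of_close rho beta yk vk y v B :
  (forall d, 0 < d -> exists y' v', closev n d y y' /\ closev n d v v' /\ Psi P rho beta yk vk y' v' <= B) ->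
  Psi P rho beta yk vk y v <= B.
Proof.
  intros H. apply Rnot_lt_le. intros Hlt.
  destruct (Psi_continuous rho beta yk vk y v (Psi P rho beta yk vk y v - B)) as [d [Hd G]]; [lra|].
  destruct (H d Hd) as [y' [v' [Hy [Hv HB]]]]. specialize (G y' v' Hy Hv).
  apply Rabs_lt_between' in G. lra.
Qed.

Lemma Psi_ge_of_close rho beta yk vk y v B :
  (forall d, 0 < d -> exists y' v', closev n d y y' /\ closev n d v v' /\ B <= Psi P rho beta yk vk y' v') ->
  B <= Psi P rho beta yk vk y v.
Proof.
  intros H. apply Rnot_lt_le. intros Hlt.
  destruct (Psi_continuous rho beta yk vk y v (B - Psi P rho beta yk vk y v)) as [d [Hd G]]; [lra|].
  destruct (H d Hd) as [y' [v' [Hy [Hv HB]]]]. specialize (G y' v' Hy Hv).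
  apply Rabs_lt_between' in G. lra.
Qed.

Lemma fobj_continuous_v y v e : 0 < e -> exists d, 0 < d /\ forall v',
  closev n d v v' -> Rabs (fobj P y v' - fobj P y v) < e.
Proof.
  intros He.
  destruct (sumR_jointly_continuous n (fun a => potential (tt P a)) y v) with (e := e) as [d [Hd H]]; auto.
  { intros a Ha. apply potential_jointly_continuous, tt_C1; auto. }
  exists d. split; auto. intros v' Hv. apply (H y v'); auto. apply closev_refl; auto.
Qed.

(* AMA may return an accumulation point of its iterates; all the argument needs about the
   iterates is that they stay in the closures of Upsilon_tau and V. *)
Definition Ups_closure (y : vec) : Prop := forall e, 0 < e -> exists y', Ups P y' /\ closev n e y y'.
Definition Vset_closure (v : vec) : Prop := forall e, 0 < e -> exists v', Vset P v' /\ closev n e v v'.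

Lemma Ups_closure_of_Ups y : Ups P y -> Ups_closure y.
Proof. intros H e He. exists y. split; auto. apply closev_refl; auto. Qed.

Lemma Vset_closure_of_Vset v : Vset P v -> Vset_closure v.
Proof. intros H e He. exists v. split; auto. apply closev_refl; auto. Qed.

Lemma Ups_closure_Yset y : Ups_closure y -> Yset P y.
Proof.
  intros H a Ha. split; apply Rnot_lt_le; intros Hlt.
  - destruct (H (- y a)) as [y' [[Hy' _] Hc]]; [lra|].
    specialize (Hc a Ha). specialize (Hy' a Ha). apply Rabs_lt_between' in Hc. lra.
  - destruct (H (y a - cap P a)) as [y' [[Hy' _] Hc]]; [lra|].
    specialize (Hc a Ha). specialize (Hy' a Ha). apply Rabs_lt_between' in Hc. lra.
Qed.

Lemma Vset_closure_bounded v : Vset_closure v -> forall a, (a < n)%nat -> 0 <= v a <= flow_bound P.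
Proof.
  intros H a Ha. split; apply Rnot_lt_le; intros Hlt.
  - destruct (H (- v a)) as [v' [Hv' Hc]]; [lra|].
    specialize (Hc a Ha). destruct (Vset_bounded v' Hv' a Ha). apply Rabs_lt_between' in Hc. lra.
  - destruct (H (v a - flow_bound P)) as [v' [Hv' Hc]]; [lra|].
    specialize (Hc a Ha). destruct (Vset_bounded v' Hv' a Ha). apply Rabs_lt_between' in Hc. lra.
Qed.

Lemma gval_le_fobj_closure y v : Vset_closure v -> gval P y <= fobj P y v.
Proof.
  intros H. apply Rnot_lt_le. intros Hlt.
  destruct (fobj_continuous_v y v (gval P y - fobj P y v)) as [d [Hd G]]; [lra|].
  destruct (H d Hd) as [v' [Hv' Hc]]. specialize (G v' Hc).
  assert (gval P y <= fobj P y v') by (apply gval_le_fobj; auto).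
  apply Rabs_lt_between' in G. lra.
Qed.

Lemma Fobj_bounded : exists C, forall y v, Yset P y ->
  (forall a, (a < n)%nat -> 0 <= v a <= flow_bound P) -> Rabs (Fobj P y v) <= C.
Proof.
  destruct (finite_max_bound n (fun a C => forall y v, 0 <= y <= cap P a -> 0 <= v <= flow_bound P ->
              Rabs (tt P a y v * v + eta P * GG P a y) <= C)) as [C HC].
  - intros a Ha. destruct (standing_link a Ha) as [Ht [Hm [_ [HG0 [_ HGm]]]]].
    destruct (t_bounded_rect (tt P a) Ht Hm (cap P a) (flow_bound P)) as [T HT].
    assert (Heta : 0 < eta P) by apply HP.
    exists (T * flow_bound P + eta P * GG P a (cap P a)). intros y v Hy Hv.
    eapply Rle_trans; [apply Rabs_triang|]. rewrite !Rabs_mult.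
    specialize (HT y v Hy Hv). assert (0 <= Rabs (tt P a y v)) by apply Rabs_pos.
    assert (Rabs (tt P a y v) * Rabs v <= T * flow_bound P)
      by (apply Rmult_le_compat; auto; [apply Rabs_pos|rewrite Rabs_pos_eq; lra]).
    assert (0 <= GG P a y) by (apply HG0; lra).
    assert (GG P a y <= GG P a (cap P a))
      by (destruct (Req_dec y (cap P a)) as [->|]; [lra|left; apply HGm; lra]).
    rewrite (Rabs_pos_eq (eta P)), (Rabs_pos_eq (GG P a y)) by lra.
    assert (eta P * GG P a y <= eta P * GG P a (cap P a)) by (apply Rmult_le_compat_l; lra). lra.
  - intros a C C' HC G y v Hy Hv. specialize (G y v Hy Hv). lra.
  - exists (sumR n (fun _ => C)). intros y v Hy Hv. unfold Fobj.
    rewrite <- sumR_scal, <- sumR_add. eapply Rle_trans; [apply sumR_abs_le|].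
    apply sumR_le. intros a Ha. apply HC; auto.
Qed.

Lemma Psi_lower_bound_Vset_closure rho beta yk vk y X :
  (forall v', Vset P v' -> X <= Psi P rho beta yk vk y v') ->
  forall v, Vset_closure v -> X <= Psi P rho beta yk vk y v.
Proof.
  intros H v Hv. apply Psi_ge_of_close. intros d Hd. destruct (Hv d Hd) as [v' [Hv' Hc]].
  exists y, v'. split; [apply closev_refl; auto|split; auto].
Qed.

Lemma Psi_lower_bound_Ups_closure rho beta yk vk v X :
  (forall y', Ups P y' -> X <= Psi P rho beta yk vk y' v) ->
  forall y, Ups_closure y -> X <= Psi P rho beta yk vk y v.
Proof.
  intros H y Hy. apply Psi_ge_of_close. intros d Hd. destruct (Hy d Hd) as [y' [Hy' Hc]].
  exists y', v. split; auto. split; [apply closev_refl; auto|auto].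
Qed.

(* Alternating minimization never increases Psi; its first v-step already does at least as
   well as any v from (yk, .), and the bound passes to accumulation points by continuity. *)
Lemma AMA_out_descent rho beta yk vk yo vo : AMA_out P rho beta yk vk yk yo vo -> Ups_closure yk ->
  Ups_closure yo /\ Vset_closure vo /\
  forall v, Vset_closure v -> Psi P rho beta yk vk yo vo <= Psi P rho beta yk vk yk v.
Proof.
  intros [Y [Vs [HY0 [Hstep Hout]]]] Hyk.
  set (Ps := Psi P rho beta yk vk).
  set (B := Ps yk (Vs 1%nat)).
  set (no_stop_before := fun j => forall i, (i < j)%nat ->
                                    ~ partial_opt P rho beta yk vk (Y (S i)) (Vs (S i))).
  destruct (Hstep O ltac:(intros; lia)) as [[HV1 Hopt1] [HU1 HoptY1]].
  rewrite HY0 in Hopt1.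
  assert (HB : forall v, Vset_closure v -> B <= Ps yk v)
    by (apply Psi_lower_bound_Vset_closure; intros v' Hv'; apply Hopt1; auto).
  assert (Hdesc : forall j, no_stop_before j ->
            Ps (Y (S j)) (Vs (S j)) <= B /\ Ups P (Y (S j)) /\ Vset P (Vs (S j))).
  { induction j as [|j IH]; intros Hnp.
    - split; [|split; auto]. unfold B, Ps.
      apply (Psi_lower_bound_Ups_closure rho beta yk vk (Vs 1%nat) _ HoptY1 yk Hyk).
    - destruct (IH (fun i Hi => Hnp i ltac:(lia))) as [Hle [HUj HVj]].
      destruct (Hstep (S j) Hnp) as [[HVs Hos] [HUs HoYs]].
      split; [|split; auto].
      assert (Ps (Y (S j)) (Vs (S (S j))) <= Ps (Y (S j)) (Vs (S j))) by (apply Hos; auto).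
      assert (Ps (Y (S (S j))) (Vs (S (S j))) <= Ps (Y (S j)) (Vs (S (S j)))) by (apply HoYs; auto).
      lra. }
  destruct Hout as [[j [Hnp [_ [-> ->]]]] | [Hall Hacc]].
  - destruct (Hdesc j Hnp) as [Hle [HU HV]].
    split; [apply Ups_closure_of_Ups; auto|split; [apply Vset_closure_of_Vset; auto|]].
    intros v Hv. specialize (HB v Hv). unfold Ps in *. lra.
  - assert (Hnp : forall j, no_stop_before j) by (intros j i _; apply Hall).
    assert (Hacc' : forall d, 0 < d -> exists j, closev n d yo (Y (S j)) /\ closev n d vo (Vs (S j))).
    { intros d Hd. destruct (Hacc (d * d) ltac:(nra) 1%nat) as [[|j] [Hj Hs]]; [lia|].
      exists j. assert (0 <= sqdist n (Y (S j)) yo) by apply sqdist_ge0.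
      assert (0 <= sqdist n (Vs (S j)) vo) by apply sqdist_ge0.
      split; apply closev_of_sqdist; auto; lra. }
    split; [|split].
    + intros d Hd. destruct (Hacc' d Hd) as [j [Hc _]]. exists (Y (S j)). split; auto. apply Hdesc; auto.
    + intros d Hd. destruct (Hacc' d Hd) as [j [_ Hc]]. exists (Vs (S j)). split; auto. apply Hdesc; auto.
    + intros v Hv. assert (Hle : Ps yo vo <= B).
      { apply Psi_le_of_close. intros d Hd. destruct (Hacc' d Hd) as [j [Hc1 Hc2]].
        exists (Y (S j)), (Vs (S j)). split; auto. split; auto. apply Hdesc; auto. }
      specialize (HB v Hv). unfold Ps in *. lra.
Qed.
End Network.

Lemma mult_between_of_div_between lo hi r b : 0 < r -> lo / r <= b <= hi / r -> lo <= r * b <= hi.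
Proof.
  intros Hr Hb. replace lo with (r * (lo / r)) by (field; lra).
  replace hi with (r * (hi / r)) by (field; lra). split; apply Rmult_le_compat_l; lra.
Qed.

Section PDCWithoutStop.
Variable P : instance.
Hypothesis HP : standing_assumptions P.
Variables (eps1 eps2 eps3 thl thu rho0 sigma : R) (y0 : vec).
Hypotheses (He1 : 0 < eps1) (He2 : 0 < eps2) (He3 : 0 < eps3) (Hthl : 0 < thl)
  (Hrho0 : 0 < rho0) (Hsigma : 1 < sigma) (Hy0 : Ups P y0).
Variables (ys vs : nat -> vec) (rho beta : nat -> R).
Hypothesis Hrun : PDC_run P eps1 eps2 eps3 thl thu rho0 sigma y0 ys vs rho beta.
Hypothesis Hnever : forall k, ~ PDC_stop P eps1 eps2 eps3 ys vs k.

Notation n := (nL P).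
Notation Phi_k k := (Phi P (ys (S k)) (vs (S k)) (ys k) (vs k)).
Notation Psi_k k := (Psi P (rho k) (beta k) (ys k) (vs k)).

Lemma PDC_AMA k : AMA_out P (rho k) (beta k) (ys k) (vs k) (ys k) (ys (S k)) (vs (S k)).
Proof. apply Hrun. intros i _. apply Hnever. Qed.

Lemma PDC_update k : rho (S k) = (if Rlt_dec eps3 (Phi_k k) then sigma * rho k else rho k) /\
  thl / rho (S k) <= beta (S k) <= thu / rho (S k).
Proof. apply Hrun. intros i _. apply Hnever. Qed.

Lemma Vset_vs0 : Vset P (vs O).
Proof. apply Hrun. Qed.

Lemma PDC_invariant k : Ups_closure P (ys k) /\ Vset_closure P (vs k) /\
  0 < rho k /\ thl <= rho k * beta k <= thu.
Proof.
  destruct Hrun as [Hys0 [[Hvs0 _] [Hr0 [Hb0 _]]]].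
  induction k as [|k [Hu [Hv [Hr Hb]]]].
  - rewrite Hys0, Hr0. split; [apply Ups_closure_of_Ups; auto|].
    split; [apply Vset_closure_of_Vset; auto|]. split; auto.
    apply mult_between_of_div_between; auto.
  - destruct (AMA_out_descent P HP _ _ _ _ _ _ (PDC_AMA k) Hu) as [Hu' [Hv' _]].
    destruct (PDC_update k) as [Hrk Hbk].
    assert (Hr' : 0 < rho (S k)) by (rewrite Hrk; destruct (Rlt_dec _ _); nra).
    split; auto. split; auto. split; auto. apply mult_between_of_div_between; auto.
Qed.

Lemma PDC_descent k v : Vset_closure P v -> Psi_k k (ys (S k)) (vs (S k)) <= Psi_k k (ys k) v.
Proof. apply (AMA_out_descent P HP _ _ _ _ _ _ (PDC_AMA k)), PDC_invariant. Qed.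

Lemma rho_le_succ k : rho k <= rho (S k).
Proof.
  destruct (PDC_update k) as [Hrk _]. destruct (PDC_invariant k) as [_ [_ [Hr _]]].
  rewrite Hrk. destruct (Rlt_dec _ _); nra.
Qed.

Lemma rho_le i j : (i <= j)%nat -> rho i <= rho j.
Proof. induction 1; [lra|]. specialize (rho_le_succ m). lra. Qed.

Lemma Phi_at_base k v : Phi P (ys k) v (ys k) (vs k) = fobj P (ys k) v - gval P (ys k).
Proof. unfold Phi. rewrite sumR_eq0 by (intros; ring). ring. Qed.

Lemma Fobj_bounded_on_iterates : exists CF, forall y v, Ups_closure P y -> Vset_closure P v ->
  Rabs (Fobj P y v) <= CF.
Proof.
  destruct (Fobj_bounded P HP) as [CF HCF]. exists CF. intros y v Hy Hv.
  apply HCF; [apply Ups_closure_Yset|apply Vset_closure_bounded]; auto.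
Qed.

(* Comparing with a near-minimizer of f(y^k, .) in the descent inequality bounds
   rho^k Phi^k by a constant. *)
Lemma rho_bounded_when_Phi_large : exists W, forall k, eps3 < Phi_k k -> rho k * eps3 < W.
Proof.
  destruct Fobj_bounded_on_iterates as [CF HCF].
  set (Sv := sumR n (fun _ => flow_bound P * flow_bound P)).
  exists (2 * CF + 1 + thu * Sv). intros k Hk.
  destruct (PDC_invariant k) as [Hu [Hvk [Hr Hb]]].
  destruct (PDC_invariant (S k)) as [Hu' [Hv' _]].
  destruct (gval_approx P HP (vs O) Vset_vs0 (ys k) (/ rho k)) as [v [HvV Hfv]];
    [apply Rinv_0_lt_compat; auto|].
  assert (Hvc := Vset_closure_of_Vset P v HvV).
  assert (H1 := PDC_descent k v Hvc). unfold Psi in H1. rewrite Phi_at_base, sqdist_diag in H1.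
  assert (A1 := HCF _ _ Hu' Hv'). assert (A2 := HCF _ _ Hu Hvc).
  apply Rabs_le_between in A1. apply Rabs_le_between in A2.
  assert (A3 : sqdist n v (vs k) <= Sv).
  { apply sumR_le. intros a Ha.
    destruct (Vset_closure_bounded P HP v Hvc a Ha). destruct (Vset_closure_bounded P HP _ Hvk a Ha).
    simpl. nra. }
  assert (A4 : rho k * (fobj P (ys k) v - gval P (ys k)) <= 1).
  { assert (rho k * (fobj P (ys k) v - gval P (ys k)) <= rho k * / rho k)
      by (apply Rmult_le_compat_l; lra).
    rewrite Rinv_r in H; lra. }
  assert (A5 : 0 <= rho k * beta k * (sqdist n (ys (S k)) (ys k) + sqdist n (vs (S k)) (vs k))).
  { assert (0 <= sqdist n (ys (S k)) (ys k)) by apply sqdist_ge0.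
    assert (0 <= sqdist n (vs (S k)) (vs k)) by apply sqdist_ge0.
    apply Rmult_le_pos; lra. }
  assert (A6 : rho k * beta k * (0 + sqdist n v (vs k)) <= thu * Sv)
    by (assert (0 <= sqdist n v (vs k)) by apply sqdist_ge0;
        rewrite Rplus_0_l; apply Rmult_le_compat; lra).
  assert (A7 : rho k * eps3 < rho k * Phi_k k) by (apply Rmult_lt_compat_l; auto).
  lra.
Qed.

Lemma Phi_eventually_small : exists K, forall k, (K <= k)%nat -> ~ eps3 < Phi_k k.
Proof.
  apply NNPP. intros Hinf.
  assert (Hlarge : forall K, exists k, (K <= k)%nat /\ eps3 < Phi_k k).
  { intros K. apply NNPP. intros Hn. apply Hinf. exists K. intros k Hk Hl. apply Hn. exists k; auto. }
  assert (Hgrow : forall m, exists k, eps3 < Phi_k k /\ rho0 * sigma ^ m <= rho k).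
  { induction m as [|m [k [Hk Hrk]]].
    - destruct (Hlarge O) as [k [_ Hk]]. exists k. split; auto.
      rewrite pow_O, Rmult_1_r. replace rho0 with (rho O) by apply Hrun. apply rho_le; lia.
    - destruct (Hlarge (S k)) as [k' [Hk' Hk'']]. exists k'. split; auto.
      assert (rho (S k) <= rho k') by (apply rho_le; auto).
      destruct (PDC_update k) as [Hrs _]. destruct (Rlt_dec _ _); [|contradiction].
      simpl. nra. }
  destruct rho_bounded_when_Phi_large as [W HW].
  destruct (INR_unbounded (W / (rho0 * eps3) / (sigma - 1))) as [m Hm].
  destruct (Hgrow m) as [k [Hk Hrk]]. specialize (HW k Hk).
  assert (Hpow := Rle_pow_lin (sigma - 1) m ltac:(lra)).
  replace (1 + (sigma - 1)) with sigma in Hpow by ring.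
  assert (Hp : 0 < rho0 * eps3) by nra.
  assert (W / (rho0 * eps3) < sigma ^ m).
  { apply Rmult_lt_compat_r with (r := sigma - 1) in Hm; [|lra].
    unfold Rdiv at 1 in Hm. rewrite Rmult_assoc, Rinv_l in Hm; lra. }
  assert (W < sigma ^ m * (rho0 * eps3)).
  { apply Rmult_lt_compat_r with (r := rho0 * eps3) in H; auto.
    unfold Rdiv in H. rewrite Rmult_assoc, Rinv_l in H; lra. }
  assert (rho0 * sigma ^ m * eps3 <= rho k * eps3) by (apply Rmult_le_compat_r; lra).
  lra.
Qed.

Lemma rho_eventually_constant : exists K, forall k, (K <= k)%nat ->
  ~ eps3 < Phi_k k /\ rho k = rho K.
Proof.
  destruct Phi_eventually_small as [K HK]. exists K. intros k Hk. split; auto.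
  induction Hk as [|m Hm IH]; auto.
  destruct (PDC_update m) as [Hrm _]. rewrite Hrm, <- IH.
  destruct (Rlt_dec _ _) as [Hl|]; [exfalso; apply (HK m); auto|auto].
Qed.

(* Once rho is frozen at r, the merit F + r (f - g) is a Lyapunov function: the subgradient
   inequality for g gives Phi^k >= f - g at the new iterate, and since the algorithm does not
   stop, the proximal term forces a decrease by at least thl * min(eps1^2, eps2^2). *)
Definition merit (r : R) (j : nat) : R :=
  Fobj P (ys j) (vs j) + r * (fobj P (ys j) (vs j) - gval P (ys j)).

Lemma merit_decrease K r : (forall k, (K <= k)%nat -> ~ eps3 < Phi_k k /\ rho k = r) ->
  forall k, (K <= k)%nat -> merit r (S k) + thl * Rmin (eps1 * eps1) (eps2 * eps2) <= merit r k.
Proof.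
  intros HK k Hk. destruct (HK k Hk) as [HPhi Hrk].
  destruct (PDC_invariant k) as [Hu [Hv [Hr Hb]]]. destruct (PDC_invariant (S k)) as [Hu' _].
  set (mm := Rmin (eps1 * eps1) (eps2 * eps2)).
  assert (H1 := PDC_descent k (vs k) Hv). unfold Psi in H1. rewrite Phi_at_base, !sqdist_diag in H1.
  assert (Hsg := gval_subgradient P HP (vs O) Vset_vs0 (ys k) (Ups_closure_Yset P (ys k) Hu)
                   (ys (S k)) (Ups_closure_Yset P _ Hu')).
  assert (HS : mm <= sqdist n (ys (S k)) (ys k) + sqdist n (vs (S k)) (vs k)).
  { assert (0 <= sqdist n (ys (S k)) (ys k)) by apply sqdist_ge0.
    assert (0 <= sqdist n (vs (S k)) (vs k)) by apply sqdist_ge0.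
    assert (mm <= eps1 * eps1) by apply Rmin_l. assert (mm <= eps2 * eps2) by apply Rmin_r.
    destruct (Rle_dec (sqdist n (ys (S k)) (ys k)) (eps1 * eps1)); [|lra].
    destruct (Rle_dec (sqdist n (vs (S k)) (vs k)) (eps2 * eps2)); [|lra].
    exfalso. apply (Hnever k). split; [apply norm2_le; auto|].
    split; [apply norm2_le; auto|]. apply Rnot_lt_le, HPhi. }
  assert (Hprod : thl * mm <= rho k * beta k *
                   (sqdist n (ys (S k)) (ys k) + sqdist n (vs (S k)) (vs k)))
    by (assert (0 <= mm) by (apply Rmin_glb; nra); apply Rmult_le_compat; lra).
  unfold Phi in H1. unfold merit. rewrite Hrk in H1, Hprod.
  assert (r * (gval P (ys k) + sumR n (fun a => gradg P (ys k) a * (ys (S k) a - ys k a)))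
          <= r * gval P (ys (S k))) by (apply Rmult_le_compat_l; lra).
  lra.
Qed.

Lemma PDC_without_stop_absurd : False.
Proof.
  destruct rho_eventually_constant as [K HK].
  set (r := rho K).
  assert (HK' : forall k, (K <= k)%nat -> ~ eps3 < Phi_k k /\ rho k = r) by exact HK.
  set (mm := Rmin (eps1 * eps1) (eps2 * eps2)).
  assert (Hmm : 0 < thl * mm) by (apply Rmult_lt_0_compat; [lra|apply Rmin_pos; nra]).
  destruct Fobj_bounded_on_iterates as [CF HCF].
  assert (Hlow : forall k, - CF <= merit r k).
  { intros k. destruct (PDC_invariant k) as [Hu [Hv _]].
    assert (H1 := proj1 (Rabs_le_between _ _) (HCF _ _ Hu Hv)).
    assert (gval P (ys k) <= fobj P (ys k) (vs k)) by (apply (gval_le_fobj_closure P HP (vs O) Vset_vs0); auto).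
    assert (0 <= r) by (left; apply (PDC_invariant K)).
    unfold merit. nra. }
  assert (Hit : forall j, merit r (K + j)%nat <= merit r K - INR j * (thl * mm)).
  { induction j as [|j IH]; [rewrite Nat.add_0_r; simpl; lra|].
    assert (H := merit_decrease K r HK' (K + j)%nat ltac:(lia)).
    rewrite Nat.add_succ_r, S_INR. fold mm in H. lra. }
  destruct (INR_unbounded ((merit r K + CF) / (thl * mm))) as [j Hj].
  specialize (Hit j). specialize (Hlow (K + j)%nat).
  apply Rmult_lt_compat_r with (r := thl * mm) in Hj; auto.
  unfold Rdiv in Hj. rewrite Rmult_assoc, Rinv_l in Hj; lra.
Qed.
End PDCWithoutStop.

Theorem proposition4p4 (P : instance) (HP : standing_assumptions P)
  (eps1 eps2 eps3 thl thu rho0 sigma : R) (y0 : vec)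
  (He1 : 0 < eps1) (He2 : 0 < eps2) (He3 : 0 < eps3)
  (Hthl : 0 < thl) (Hth : thl < thu) (Hrho0 : 0 < rho0) (Hsigma : 1 < sigma)
  (Hy0 : Ups P y0)
  (ys vs : nat -> vec) (rho beta : nat -> R)
  (Hrun : PDC_run P eps1 eps2 eps3 thl thu rho0 sigma y0 ys vs rho beta) :
  exists k : nat, PDC_stop P eps1 eps2 eps3 ys vs k.
Proof.
  apply NNPP. intros Hno.
  apply (PDC_without_stop_absurd P HP eps1 eps2 eps3 thl thu rho0 sigma y0
           He1 He2 He3 Hthl Hrho0 Hsigma Hy0 ys vs rho beta Hrun).
  intros k Hk. apply Hno. exists k. exact Hk.
Qed.
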